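(* Let $a,b,c>0$ be constants. For given constants $y_0>0$ and $z_0>0$ consider the free boundary problem of finding $\hat{x}>0$ and a function $y$ on $[0,\hat x]$ with \[ b y' - a y'' - c = 0 \ \ (0<x<\hat{x}),\qquad y(\hat{x})=0,\qquad y(0)=-y_0,\qquad y'(\hat{x})=z_0 . \] Then there exists a unique such pair $(y,\hat{x})$ with $\hat x>0$. Moreover, $\hat{x}=\hat{x}(y_0,z_0)$ is strictly increasing in $y_0$ and strictly decreasing in $z_0$, and there is $\hat{x}_c(y_0)>0$ such that \[ \lim_{y_0\to\infty}\hat{x}(y_0,z_0)=\infty,\quad \lim_{y_0\downarrow 0}\hat{x}(y_0,z_0)=0\quad\text{for every } z_0>0, \] \[ \lim_{z_0\to\infty}\hat{x}(y_0,z_0)=0,\quad \lim_{z_0\downarrow 0}\hat{x}(y_0,z_0)=\hat{x}_c(y_0)\quad\text{for every } y_0>0 . \] The function $\hat{x}_c$ is strictly increasing with $\lim_{y_0\to 0}\hat{x}_c(y_0)=0$ and $\lim_{y_0\to\infty}\hat{x}_c(y_0)=\infty$. All dependences on $y_0$ and $z_0$ are analytic. *)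

From Stdlib Require Import Reals.
From Coquelicot Require Import Coquelicot.
Open Scope R_scope.

(* (y, xh) solves the free boundary problem with data (a,b,c,y0,z0):
   y is a function on [0,xh] (represented as y : R -> R, only values on
   [0,xh] matter), twice differentiable on (0,xh) with
   b y' - a y'' - c = 0 there, continuous at 0 from the right,
   y(xh) = 0, y(0) = -y0, and the (left) derivative of y at xh is z0. *)
Definition fbp_sol (a b c y0 z0 : R) (y : R -> R) (xh : R) : Prop :=
  (exists dy ddy : R -> R,
     forall x, 0 < x < xh ->
       is_derive y x (dy x) /\ is_derive dy x (ddy x) /\
       b * dy x - a * ddy x - c = 0) /\
  filterlim y (at_right 0) (locally (y 0)) /\
  y xh = 0 /\
  y 0 = - y0 /\
  filterlim (fun h => (y (xh + h) - y xh) / h) (at_left 0) (locally z0).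

Definition analytic_on (U : R -> Prop) (f : R -> R) : Prop :=
  forall p, U p -> exists (coef : nat -> R) (r : R), 0 < r /\
    forall t, Rabs (t - p) < r -> is_pseries coef (t - p) (f t).

Definition analytic2_on (U : R -> R -> Prop) (f : R -> R -> R) : Prop :=
  forall p q, U p q -> exists (coef : nat -> nat -> R) (r : R), 0 < r /\
    forall u v, Rabs (u - p) < r -> Rabs (v - q) < r ->
      (forall i, ex_series (fun j => Rabs (coef i j) * Rabs (u - p) ^ i * Rabs (v - q) ^ j)) /\
      ex_series (fun i => Series (fun j => Rabs (coef i j) * Rabs (u - p) ^ i * Rabs (v - q) ^ j)) /\
      is_series (fun i => Series (fun j => coef i j * (u - p) ^ i * (v - q) ^ j)) (f u v).

From Stdlib Require Import Reals Lra Lia Psatz FunctionalExtensionality ClassicalEpsilon.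
From Coquelicot Require Import Coquelicot.
Open Scope R_scope.

(* Integrating [a y'' = b y' - c] over [0, x] with [y' x = z] shows that the solution rises by
   [rise k A x z = A x - (A - z) (1 - exp (- k x)) / k] on [0, x], where [k = b / a] and
   [A = c / b]; so the free boundary is the root [xhat y0 z0] of [rise k A x z0 = y0].
   As [rise] vanishes at [x = 0] and is strictly increasing in [x] and in [z], the root exists,
   is unique, and monotonicity and all limits follow by comparison, with [xhat_c y0 = xhat y0 0].
   For analyticity, along [z = z0 + w] the triple [(xhat, exp (- k xhat), 1 / d_x rise)] solves
   a polynomial ODE system, and along [y = y0 + tau] it solves another one whose Taylor
   coefficients in [tau] are power series in [w]. The formal power series solutions of both
   systems are majorized by [C M^n / (n + 1)^2], a form preserved by Cauchy products (up to the
   constant 8) and, for [M] large, by the recursion [a (n + 1) = d n / (n + 1)]; so they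
   converge, and first integrals of the systems identify their sums with [xhat]. *)

Ltac nonneg := repeat (apply Rplus_le_le_0_compat || apply Rmult_le_pos); try apply Rabs_pos; lra.

(** * Weighted majorants *)

Definition weight (n : nat) : R := / (INR n + 1) ^ 2.

Lemma weight_pos n : 0 < weight n.
Proof. unfold weight. pose proof (pos_INR n). apply Rinv_0_lt_compat. nra. Qed.

Lemma weight_0 : weight 0 = 1.
Proof. unfold weight. simpl. field. Qed.

Lemma weight_le_1 n : weight n <= 1.
Proof.
  unfold weight. pose proof (pos_INR n). rewrite <- Rinv_1.
  apply Rinv_le_contravar; nra.
Qed.

Lemma weight_le_succ n : weight n <= 4 * weight (S n).
Proof.
  unfold weight. rewrite S_INR. pose proof (pos_INR n).
  replace (4 * / (INR n + 1 + 1) ^ 2) with (/ ((INR n + 2) ^ 2 / 4)) by (field; lra).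
  apply Rinv_le_contravar; nra.
Qed.

Lemma weight_div_succ n : weight n / INR (S n) <= 4 * weight (S n).
Proof.
  pose proof (weight_le_succ n). pose proof (weight_pos n).
  assert (H1 : 1 <= INR (S n)) by (rewrite S_INR; pose proof (pos_INR n); lra).
  apply Rle_trans with (weight n); [|lra].
  unfold Rdiv. rewrite <- (Rmult_1_r (weight n)) at 2.
  apply Rmult_le_compat_l; [lra|]. rewrite <- Rinv_1. apply Rinv_le_contravar; lra.
Qed.

Lemma sum_weight_le n : sum_f_R0 weight n <= 2 - / (INR n + 1).
Proof.
  induction n as [|n IH]; [unfold weight; simpl; lra|].
  rewrite tech5, S_INR. pose proof (pos_INR n).
  assert (weight (S n) <= / (INR n + 1) - / (INR n + 1 + 1)).
  { unfold weight. rewrite S_INR.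
    replace (/ (INR n + 1) - / (INR n + 1 + 1)) with (/ ((INR n + 1) * (INR n + 1 + 1))) by (field; lra).
    apply Rinv_le_contravar; nra. }
  lra.
Qed.

(* With [u = l + 1] and [v = n - l + 1] this is [(u + v)^2 <= 2 (u^2 + v^2)]. *)
Lemma weight_mul_le n l : (l <= n)%nat ->
  weight l * weight (n - l) <= 2 / (INR n + 2) ^ 2 * (weight l + weight (n - l)).
Proof.
  intros Hl. unfold weight. rewrite minus_INR by lia.
  pose proof (le_INR _ _ Hl). pose proof (pos_INR l).
  set (u := INR l + 1). set (v := INR n - INR l + 1).
  assert (Hu : 0 < u) by (unfold u; lra). assert (Hv : 0 < v) by (unfold v; lra).
  replace (INR n + 2) with (u + v) by (unfold u, v; lra).
  replace (/ u ^ 2 * / v ^ 2) with (/ (u ^ 2 * v ^ 2)) by (field; lra).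
  replace (2 / (u + v) ^ 2 * (/ u ^ 2 + / v ^ 2))
    with (/ ((u + v) ^ 2 * (u ^ 2 * v ^ 2) / (2 * (u ^ 2 + v ^ 2)))) by (field; repeat split; nra).
  assert (Huv : 0 < u ^ 2 * v ^ 2) by (apply Rmult_lt_0_compat; apply pow_lt; lra).
  assert (Hs : 0 < (u + v) ^ 2) by (apply pow_lt; lra).
  apply Rinv_le_contravar; [apply Rdiv_lt_0_compat; [apply Rmult_lt_0_compat|]; nra|].
  apply (Rmult_le_reg_r (2 * (u ^ 2 + v ^ 2))); [nra|].
  unfold Rdiv. rewrite Rmult_assoc, Rinv_l, Rmult_1_r by nra.
  rewrite Rmult_comm. apply Rmult_le_compat_l; [lra|].
  assert (0 <= (u - v) ^ 2) by apply pow2_ge_0. nra.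
Qed.

Lemma weight_conv_le n : sum_f_R0 (fun l => weight l * weight (n - l)) n <= 8 * weight n.
Proof.
  eapply Rle_trans; [apply sum_Rle; intros l Hl; apply (weight_mul_le n l Hl)|].
  rewrite (sum_eq _ (fun l => (weight l + weight (n - l)) * (2 / (INR n + 2) ^ 2))) by (intros; ring).
  rewrite <- scal_sum, plus_sum, sum_f_R0_skip.
  pose proof (sum_weight_le n). pose proof (pos_INR n).
  assert (0 < / (INR n + 1)) by (apply Rinv_0_lt_compat; lra).
  assert (Hp : 0 <= 2 / (INR n + 2) ^ 2) by (apply Rdiv_le_0_compat; nra).
  apply Rle_trans with (2 / (INR n + 2) ^ 2 * 4); [apply Rmult_le_compat_l; lra|].
  unfold weight. replace (2 / (INR n + 2) ^ 2 * 4) with (8 * / (INR n + 2) ^ 2) by (field; lra).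
  apply Rmult_le_compat_l; [lra|]. apply Rinv_le_contravar; nra.
Qed.

Definition majorized_upto (a : nat -> R) (C M : R) (n : nat) : Prop :=
  forall l, (l <= n)%nat -> Rabs (a l) <= C * M ^ l * weight l.

Definition majorized (a : nat -> R) (C M : R) : Prop := forall n, majorized_upto a C M n.

Definition has_majorant (a : nat -> R) (M : R) : Prop := exists C, majorized a C M.

Section Majorants.

Variables (M : R) (n : nat).

Lemma majorized_upto_ge0 a C : majorized_upto a C M n -> 0 <= C.
Proof.
  intros H. specialize (H 0%nat (Nat.le_0_l _)). rewrite weight_0 in H. simpl in H.
  pose proof (Rabs_pos (a 0%nat)). lra.
Qed.

Lemma majorized_upto_weaken a C C' : 0 <= M -> C <= C' ->
  majorized_upto a C M n -> majorized_upto a C' M n.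
Proof.
  intros M_ge0 HC H l Hl. eapply Rle_trans; [apply H, Hl|].
  pose proof (weight_pos l). pose proof (pow_le M l M_ge0).
  apply Rmult_le_compat_r; [lra|]. apply Rmult_le_compat_r; lra.
Qed.

Lemma majorized_upto_mult a b Ca Cb : 0 <= M -> majorized_upto a Ca M n -> majorized_upto b Cb M n ->
  majorized_upto (PS_mult a b) (8 * Ca * Cb) M n.
Proof.
  intros M_ge0 Ha Hb l Hl. unfold PS_mult.
  pose proof (majorized_upto_ge0 _ _ Ha). pose proof (majorized_upto_ge0 _ _ Hb).
  eapply Rle_trans; [apply sum_f_R0_triangle|].
  eapply Rle_trans.
  { apply sum_Rle. intros i Hi. rewrite Rabs_mult.
    apply Rmult_le_compat; try apply Rabs_pos; [apply Ha | apply Hb]; lia. }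
  rewrite (sum_eq _ (fun i => (weight i * weight (l - i)) * (Ca * Cb * M ^ l))).
  2: { intros i Hi. replace (M ^ l) with (M ^ i * M ^ (l - i)); [ring|].
       rewrite <- pow_add. f_equal. lia. }
  rewrite <- scal_sum.
  replace (8 * Ca * Cb * M ^ l * weight l) with (Ca * Cb * M ^ l * (8 * weight l)) by ring.
  apply Rmult_le_compat_l; [pose proof (pow_le M l M_ge0); repeat apply Rmult_le_pos; lra | apply weight_conv_le].
Qed.

Lemma majorized_upto_plus a b Ca Cb : majorized_upto a Ca M n -> majorized_upto b Cb M n ->
  majorized_upto (PS_plus a b) (Ca + Cb) M n.
Proof.
  intros Ha Hb l Hl. eapply Rle_trans; [apply Rabs_triang|].
  specialize (Ha l Hl). specialize (Hb l Hl). lra.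
Qed.

Lemma majorized_upto_scal c a C : majorized_upto a C M n ->
  majorized_upto (PS_scal c a) (Rabs c * C) M n.
Proof.
  intros Ha l Hl. change (Rabs (c * a l) <= Rabs c * C * M ^ l * weight l).
  rewrite Rabs_mult, !Rmult_assoc. apply Rmult_le_compat_l; [apply Rabs_pos|].
  rewrite <- !Rmult_assoc. apply Ha, Hl.
Qed.

Lemma majorized_upto_minus a b Ca Cb : majorized_upto a Ca M n -> majorized_upto b Cb M n ->
  majorized_upto (PS_minus a b) (Ca + Cb) M n.
Proof.
  intros Ha Hb l Hl. change (Rabs (a l - b l) <= (Ca + Cb) * M ^ l * weight l).
  eapply Rle_trans; [apply Rabs_triang|]. rewrite Rabs_Ropp.
  specialize (Ha l Hl). specialize (Hb l Hl). lra.
Qed.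

Lemma majorized_upto_incr_1 a C : 1 <= M -> majorized_upto a C M n ->
  majorized_upto (PS_incr_1 a) (4 * C) M n.
Proof.
  intros HM Ha [|l] Hl; pose proof (majorized_upto_ge0 _ _ Ha).
  - change (Rabs 0 <= 4 * C * M ^ 0 * weight 0). rewrite Rabs_R0, weight_0. simpl. lra.
  - change (Rabs (a l) <= 4 * C * M ^ S l * weight (S l)).
    pose proof (weight_le_succ l). pose proof (weight_pos l). pose proof (pow_le M l ltac:(lra)).
    eapply Rle_trans; [apply Ha; lia|]. simpl.
    replace (4 * C * (M * M ^ l) * weight (S l)) with (C * (M * M ^ l) * (4 * weight (S l))) by ring.
    apply Rmult_le_compat; [nra | lra | apply Rmult_le_compat_l; nra | lra].
Qed.

End Majorants.

(* The induction step for coefficients defined by [a (n + 1) = d n / (n + 1)];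
   [X] is the extra factor of the two-variable majorants. *)
Lemma majorant_step_bound d c C M n X : 0 <= c -> 0 <= X -> 0 < M -> 4 * c <= C * M ->
  Rabs d <= c * M ^ n * weight n * X ->
  Rabs (d / INR (S n)) <= C * M ^ S n * weight (S n) * X.
Proof.
  intros Hc HX HM HcC Hd.
  assert (Hn : 0 < INR (S n)) by (apply lt_0_INR; lia).
  pose proof (weight_div_succ n). pose proof (weight_pos n). pose proof (weight_pos (S n)).
  pose proof (pow_lt M n HM).
  unfold Rdiv. rewrite Rabs_mult, Rabs_inv, (Rabs_right (INR (S n))) by lra.
  apply Rle_trans with (c * M ^ n * X * (weight n / INR (S n))).
  { unfold Rdiv. replace (c * M ^ n * X * (weight n * / INR (S n)))
      with (c * M ^ n * weight n * X * / INR (S n)) by ring.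
    apply Rmult_le_compat_r; [left; apply Rinv_0_lt_compat|]; lra. }
  apply Rle_trans with (c * M ^ n * X * (4 * weight (S n))).
  { apply Rmult_le_compat_l; [repeat apply Rmult_le_pos|]; lra. }
  simpl. replace (c * M ^ n * X * (4 * weight (S n))) with (4 * c * (M ^ n * X * weight (S n))) by ring.
  replace (C * (M * M ^ n) * weight (S n) * X) with (C * M * (M ^ n * X * weight (S n))) by ring.
  apply Rmult_le_compat_r; [repeat apply Rmult_le_pos|]; lra.
Qed.

Lemma majorized_upto_succ (a d : nat -> R) c C M n : 0 <= c -> 0 < M -> 4 * c <= C * M ->
  a (S n) = d n / INR (S n) -> majorized_upto a C M n -> majorized_upto d c M n ->
  majorized_upto a C M (S n).
Proof.
  intros Hc HM HcC Ha Hn Hd l Hl. destruct (Nat.eq_dec l (S n)) as [->|]; [|apply Hn; lia].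
  rewrite Ha, <- (Rmult_1_r (C * _ * _)).
  apply majorant_step_bound with c; try lra. rewrite Rmult_1_r. apply Hd, le_n.
Qed.

Lemma majorized_le_geom a C M : 0 <= M -> majorized a C M -> forall n, Rabs (a n) <= C * M ^ n.
Proof.
  intros HM H n. pose proof (majorized_upto_ge0 M n a C (H n)).
  specialize (H n n (le_n n)). pose proof (weight_le_1 n). pose proof (weight_pos n).
  pose proof (pow_le M n HM). assert (0 <= C * M ^ n) by nra. nra.
Qed.

Lemma has_majorant_mult a b M : 0 <= M -> has_majorant a M -> has_majorant b M ->
  has_majorant (PS_mult a b) M.
Proof. intros HM [Ca Ha] [Cb Hb]. exists (8 * Ca * Cb). intros n. apply majorized_upto_mult; auto. Qed.

Lemma has_majorant_plus a b M : 0 <= M -> has_majorant a M -> has_majorant b M ->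
  has_majorant (PS_plus a b) M.
Proof. intros HM [Ca Ha] [Cb Hb]. exists (Ca + Cb). intros n. apply majorized_upto_plus; auto. Qed.

Lemma has_majorant_minus a b M : 0 <= M -> has_majorant a M -> has_majorant b M ->
  has_majorant (PS_minus a b) M.
Proof. intros HM [Ca Ha] [Cb Hb]. exists (Ca + Cb). intros n. apply majorized_upto_minus; auto. Qed.

Lemma has_majorant_scal c a M : 0 <= M -> has_majorant a M -> has_majorant (PS_scal c a) M.
Proof. intros HM [C Ha]. exists (Rabs c * C). intros n. apply majorized_upto_scal; auto. Qed.

Lemma has_majorant_incr_1 a M : 1 <= M -> has_majorant a M -> has_majorant (PS_incr_1 a) M.
Proof. intros HM [C Ha]. exists (4 * C). intros n. apply majorized_upto_incr_1; auto; lra. Qed.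

Ltac solve_majorized_upto :=
  repeat first [ assumption | lra
               | match goal with H : majorized ?a _ _ |- majorized_upto ?a _ _ _ => apply H end
               | apply majorized_upto_mult | apply majorized_upto_minus
               | apply majorized_upto_plus | apply majorized_upto_scal | apply majorized_upto_incr_1 ].

Ltac solve_has_majorant :=
  repeat first [ assumption | lra | apply has_majorant_mult | apply has_majorant_minus
               | apply has_majorant_plus | apply has_majorant_scal | apply has_majorant_incr_1 ].

Lemma has_majorant_inside a M x : 0 < M -> has_majorant a M -> Rabs x < / M ->
  Rbar_lt (Rabs x) (CV_radius a).
Proof.
  intros HM [C HC] Hx. apply Rbar_lt_le_trans with (/ M); [exact Hx|].
  apply (proj1 (CV_radius_bounded a)). exists C. intros n.
  pose proof (majorized_upto_ge0 M n a C (HC n)).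
  rewrite Rabs_mult, <- RPow_abs, (Rabs_right (/ M)), pow_inv
    by (left; apply Rinv_0_lt_compat, HM).
  pose proof (majorized_le_geom a C M ltac:(lra) HC n). pose proof (pow_lt M n HM).
  apply Rle_trans with (C * M ^ n * / M ^ n).
  - apply Rmult_le_compat_r; [left; apply Rinv_0_lt_compat|]; lra.
  - right. field. lra.
Qed.

Lemma series_dominated_geom (b : nat -> R) C q : 0 <= q <= / 2 ->
  (forall n, 0 <= b n <= C * q ^ n) -> ex_series b /\ 0 <= Series b <= 2 * C.
Proof.
  intros Hq Hb. assert (HC : 0 <= C) by (specialize (Hb 0%nat); simpl in Hb; lra).
  assert (G : is_series (fun n => C * q ^ n) (C * / (1 - q))).
  { apply (is_series_scal_l C (fun n => q ^ n)), is_series_geom. rewrite Rabs_right; lra. }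
  assert (Hex : ex_series b).
  { apply (@ex_series_le R_AbsRing R_CompleteNormedModule _ (fun n => C * q ^ n)); [|eexists; exact G].
    intros n. change (Rabs (b n) <= C * q ^ n). rewrite Rabs_right; [|apply Rle_ge]; apply Hb. }
  split; [exact Hex | split].
  { pose proof (Series_le (fun n => 0 * b n) b) as H0. rewrite Series_scal_l, Rmult_0_l in H0.
    apply H0; [intros n; rewrite Rmult_0_l; pose proof (Hb n); lra | exact Hex]. }
  eapply Rle_trans; [apply Series_le; [exact Hb | eexists; exact G]|].
  rewrite (is_series_unique _ _ G), (Rmult_comm 2 C). apply Rmult_le_compat_l; [exact HC|].
  replace 2 with (/ / 2) by field. apply Rinv_le_contravar; lra.
Qed.

Lemma PSeries_geom_bound a C N x : (forall n, Rabs (a n) <= C * N ^ n) -> 0 <= N -> N * Rabs x <= / 2 ->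
  ex_series (fun n => Rabs (a n * x ^ n)) /\ Rabs (PSeries a x) <= 2 * C.
Proof.
  intros Ha HN Hx.
  destruct (series_dominated_geom (fun n => Rabs (a n * x ^ n)) C (N * Rabs x)) as [Hex [_ Hle]].
  - split; [apply Rmult_le_pos, Rabs_pos|]; lra.
  - intros n. split; [apply Rabs_pos|].
    rewrite Rabs_mult, <- RPow_abs, Rpow_mult_distr, <- Rmult_assoc.
    apply Rmult_le_compat_r; [apply pow_le, Rabs_pos | apply Ha].
  - split; [exact Hex|]. eapply Rle_trans; [apply Series_Rabs, Hex | exact Hle].
Qed.

Lemma PSeries_sub_0_bound a C N x : (forall n, Rabs (a n) <= C * N ^ n) -> 0 <= N ->
  N * Rabs x <= / 2 -> Rabs (PSeries a x - a 0%nat) <= 2 * C * N * Rabs x.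
Proof.
  intros Ha HN Hx.
  assert (Hex : ex_pseries a x).
  { apply ex_pseries_R, ex_series_Rabs, (PSeries_geom_bound a C N x Ha HN Hx). }
  rewrite (PSeries_decr_1 a x Hex). replace (a 0%nat + x * _ - a 0%nat) with (x * PSeries (PS_decr_1 a) x) by ring.
  assert (Hd : forall n, Rabs (PS_decr_1 a n) <= (C * N) * N ^ n).
  { intros n. replace (C * N * N ^ n) with (C * N ^ S n) by (simpl; ring). apply Ha. }
  destruct (PSeries_geom_bound _ _ N x Hd HN Hx) as [_ Hb].
  rewrite Rabs_mult. pose proof (Rabs_pos x). nra.
Qed.

Lemma PSeries_ge_half a C N x : (forall n, Rabs (a n) <= C * N ^ n) -> 0 <= N ->
  N * Rabs x <= / 2 -> 4 * C * N * Rabs x <= a 0%nat -> a 0%nat / 2 <= PSeries a x.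
Proof.
  intros Ha HN Hx Hsmall. pose proof (PSeries_sub_0_bound a C N x Ha HN Hx).
  pose proof (Rabs_maj2 (PSeries a x - a 0%nat)). lra.
Qed.

Lemma is_derive_PSeries_rec a d x : Rbar_lt (Rabs x) (CV_radius a) ->
  (forall n, a (S n) = d n / INR (S n)) -> is_derive (PSeries a) x (PSeries d x).
Proof.
  intros Hx Hrec. replace (PSeries d x) with (PSeries (PS_derive a) x); [apply is_derive_PSeries, Hx|].
  apply Series_ext. intros n. unfold PS_derive. rewrite Hrec. field. apply not_0_INR. lia.
Qed.

Lemma lt_radius_bounds rad M x : 0 < M -> rad * M <= / 2 -> Rabs x < rad ->
  Rabs x < / M /\ M * Rabs x <= / 2.
Proof.
  intros HM Hr Hx. pose proof (Rabs_pos x).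
  assert (M * Rabs x <= M * rad) by (apply Rmult_le_compat_l; lra).
  split; [|lra]. apply (Rmult_lt_reg_l M); [lra|]. rewrite Rinv_r; lra.
Qed.

Lemma PSeries_ge_half_ball a C M rad x : majorized a C M -> 0 < M -> rad * M <= / 2 ->
  rad * (4 * C * M) <= a 0%nat -> Rabs x < rad -> a 0%nat / 2 <= PSeries a x.
Proof.
  intros Ha HM HradM Hrad Hx. destruct (lt_radius_bounds rad M x HM HradM Hx) as [_ Hx2].
  apply (PSeries_ge_half _ C M); [apply majorized_le_geom; [lra | exact Ha] | lra | lra |].
  assert (0 <= C) by apply (majorized_upto_ge0 M 0 a C (Ha 0%nat)).
  assert (Rabs x * (4 * C * M) <= rad * (4 * C * M)) by (apply Rmult_le_compat_r; nonneg). lra.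
Qed.

Lemma PSeries_div (a : nat -> R) d x : PSeries (fun j => a j / d) x = PSeries a x / d.
Proof. unfold PSeries, Rdiv. rewrite <- Series_scal_r. apply Series_ext. intros n. ring. Qed.

Ltac PSeries_expand Hin :=
  repeat first
    [ rewrite PSeries_minus by (apply CV_radius_inside, Hin; solve_has_majorant)
    | rewrite PSeries_plus by (apply CV_radius_inside, Hin; solve_has_majorant)
    | rewrite PSeries_mult by (apply Hin; solve_has_majorant)
    | rewrite PSeries_scal | rewrite PSeries_incr_1 ].

(** * The rise function and its inverse *)

Lemma filterlim_at_right_intro (f : R -> R) x0 l :
  (forall eps, 0 < eps -> exists del, 0 < del /\ forall h, x0 < h < x0 + del -> Rabs (f h - l) < eps) ->
  filterlim f (at_right x0) (locally l).
Proof.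
  intros H. apply filterlim_locally. intros eps.
  destruct (H eps (cond_pos eps)) as [del [Hd Hh]].
  exists (mkposreal del Hd). intros y Hy Hy'. apply Hh.
  apply Rabs_lt_between' in Hy. simpl in Hy. lra.
Qed.

Lemma filterlim_pinfty_intro (f : R -> R) l :
  (forall eps, 0 < eps -> exists m, forall x, m < x -> Rabs (f x - l) < eps) ->
  filterlim f (Rbar_locally p_infty) (locally l).
Proof.
  intros H. apply filterlim_locally. intros eps.
  destruct (H eps (cond_pos eps)) as [m Hm]. exists m. exact Hm.
Qed.

Lemma filterlim_pinfty_pinfty_intro (f : R -> R) :
  (forall m, exists m', forall x, m' < x -> m < f x) ->
  filterlim f (Rbar_locally p_infty) (Rbar_locally p_infty).
Proof.
  intros H P [m HP]. destruct (H m) as [m' Hm']. exists m'. intros x Hx. apply HP, Hm', Hx.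
Qed.

Definition phi (k x : R) : R := (1 - exp (- (k * x))) / k.

Definition rise (k A x z : R) : R := A * x - (A - z) * phi k x.

Lemma rise_0 k A z : rise k A 0 z = 0.
Proof. unfold rise, phi. replace (- (k * 0)) with 0 by ring. rewrite exp_0. unfold Rdiv. ring. Qed.

Section Rise.

Variables k A : R.
Hypotheses (Hk : 0 < k) (HA : 0 < A).

Lemma phi_bounds x : 0 < x -> 0 < phi k x < x /\ phi k x < / k.
Proof.
  intros Hx. unfold phi.
  assert (exp (- (k * x)) < 1) by (rewrite <- exp_0; apply exp_increasing; nra).
  pose proof (exp_ineq1 (- (k * x)) ltac:(nra)). pose proof (exp_pos (- (k * x))).
  split; [split|]; apply (Rmult_lt_reg_l k); try lra; field_simplify; lra.
Qed.

Lemma phi_add x d : phi k (x + d) = phi k x + exp (- (k * x)) * phi k d.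
Proof.
  unfold phi. replace (- (k * (x + d))) with (- (k * x) + - (k * d)) by ring.
  rewrite exp_plus. field. lra.
Qed.

Lemma rise_lt x1 x2 z : 0 <= z -> 0 <= x1 -> x1 < x2 -> rise k A x1 z < rise k A x2 z.
Proof.
  intros Hz Hx1 H12. set (d := x2 - x1). replace x2 with (x1 + d) by (unfold d; ring).
  destruct (phi_bounds d ltac:(unfold d; lra)) as [[P1 P2] _].
  assert (E : exp (- (k * x1)) <= 1).
  { rewrite <- exp_0. destruct (Req_dec x1 0) as [->|]; [right; f_equal; ring|].
    left. apply exp_increasing. nra. }
  pose proof (exp_pos (- (k * x1))).
  set (X := exp (- (k * x1)) * phi k d).
  assert (0 < X < d) by (unfold X; split; nra).
  unfold rise. rewrite phi_add. fold X. nra.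
Qed.

Lemma rise_lt_iff x1 x2 z : 0 <= z -> 0 <= x1 -> 0 <= x2 ->
  (rise k A x1 z < rise k A x2 z <-> x1 < x2).
Proof.
  intros Hz H1 H2. split; [|apply rise_lt; assumption].
  intros H. destruct (Rlt_le_dec x1 x2) as [|[L|E]%Rle_lt_or_eq_dec]; [assumption| |].
  - pose proof (rise_lt x2 x1 z Hz H2 L). lra.
  - subst. lra.
Qed.

Lemma rise_z_lt x z1 z2 : 0 < x -> z1 < z2 -> rise k A x z1 < rise k A x z2.
Proof. intros Hx Hz. destruct (phi_bounds x Hx) as [[P _] _]. unfold rise. nra. Qed.

Lemma rise_ge x z : 0 < x -> 0 <= z -> z * phi k x <= rise k A x z.
Proof. intros Hx Hz. destruct (phi_bounds x Hx) as [[_ P] _]. unfold rise. nra. Qed.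

Lemma rise_le x z : 0 < x -> 0 <= z -> rise k A x z <= A * x + z / k.
Proof.
  intros Hx Hz. destruct (phi_bounds x Hx) as [[P1 _] P2]. unfold rise.
  assert (z * phi k x <= z / k) by (apply Rmult_le_compat_l; lra). nra.
Qed.

Lemma rise_continuous z : continuity (fun x => rise k A x z).
Proof.
  intros x. apply continuity_pt_filterlim.
  apply (@ex_derive_continuous R_AbsRing R_NormedModule (fun x => rise k A x z)).
  unfold rise, phi. auto_derive. repeat split.
Qed.

Lemma rise_root_exists y z : 0 < y -> 0 <= z -> exists x, 0 < x /\ rise k A x z = y.
Proof.
  intros Hy Hz. set (x1 := y / A + / k + 1).
  assert (0 < y / A) by (apply Rdiv_lt_0_compat; lra).
  assert (0 < / k) by (apply Rinv_0_lt_compat; lra).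
  assert (Hx1 : y < rise k A x1 z).
  { destruct (phi_bounds x1 ltac:(unfold x1; lra)) as [[P1 _] P2].
    unfold rise. replace (A * x1) with (y + A * (/ k + 1)) by (unfold x1; field; lra). nra. }
  destruct (IVT (fun x => rise k A x z - y) 0 x1) as [x [Hx Ex]].
  - apply continuity_minus; [apply rise_continuous | apply continuity_const; intros ? ?; reflexivity].
  - unfold x1. lra.
  - rewrite rise_0. lra.
  - lra.
  - exists x. split; [|lra]. destruct (Req_dec x 0) as [->|]; [rewrite rise_0 in Ex|]; lra.
Qed.

Definition xhat (y z : R) : R := epsilon (inhabits 0) (fun x => 0 < x /\ rise k A x z = y).

Lemma xhat_spec y z : 0 < y -> 0 <= z -> 0 < xhat y z /\ rise k A (xhat y z) z = y.
Proof. intros. unfold xhat. apply epsilon_spec, rise_root_exists; assumption. Qed.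

Lemma xhat_unique y z x : 0 <= z -> 0 < x -> rise k A x z = y -> xhat y z = x.
Proof.
  intros Hz Hx E.
  destruct (epsilon_spec (inhabits 0) (fun x => 0 < x /\ rise k A x z = y)) as [H1 H2];
    [exists x; auto|].
  fold (xhat y z) in H1, H2. destruct (Rtotal_order (xhat y z) x) as [L|[|L]]; [| assumption |];
    apply rise_lt with (z := z) in L; lra.
Qed.

Lemma xhat_lt_iff y z x : 0 < y -> 0 <= z -> 0 <= x -> (xhat y z < x <-> y < rise k A x z).
Proof.
  intros Hy Hz Hx. destruct (xhat_spec y z Hy Hz) as [P E].
  rewrite <- (rise_lt_iff _ _ z); lra.
Qed.

Lemma lt_xhat_iff y z x : 0 < y -> 0 <= z -> 0 <= x -> (x < xhat y z <-> rise k A x z < y).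
Proof.
  intros Hy Hz Hx. destruct (xhat_spec y z Hy Hz) as [P E].
  rewrite <- (rise_lt_iff _ _ z); lra.
Qed.

Lemma xhat_lt_y z y1 y2 : 0 <= z -> 0 < y1 -> y1 < y2 -> xhat y1 z < xhat y2 z.
Proof.
  intros Hz H1 H12. destruct (xhat_spec y2 z ltac:(lra) Hz) as [P E].
  apply xhat_lt_iff; lra.
Qed.

Lemma xhat_lt_z y z1 z2 : 0 < y -> 0 <= z1 -> z1 < z2 -> xhat y z2 < xhat y z1.
Proof.
  intros Hy H1 H12. destruct (xhat_spec y z1 Hy H1) as [P E].
  apply xhat_lt_iff; try lra. rewrite <- E at 1. apply rise_z_lt; assumption.
Qed.

Lemma xhat_lim_y_pinfty z : 0 <= z ->
  filterlim (fun y => xhat y z) (Rbar_locally p_infty) (Rbar_locally p_infty).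
Proof.
  intros Hz. apply filterlim_pinfty_pinfty_intro. intros m.
  set (m1 := Rmax m 1). assert (1 <= m1) by apply Rmax_r.
  assert (0 <= z / k) by (apply Rdiv_le_0_compat; lra).
  exists (A * m1 + z / k). intros y Hy.
  pose proof (rise_le m1 z ltac:(lra) Hz).
  apply Rle_lt_trans with m1; [apply Rmax_l|]. apply lt_xhat_iff; nra.
Qed.

Lemma xhat_lim_y_0 z : 0 <= z -> filterlim (fun y => xhat y z) (at_right 0) (locally 0).
Proof.
  intros Hz. apply filterlim_at_right_intro. intros eps He.
  pose proof (rise_lt 0 eps z Hz (Rle_refl 0) He) as R. rewrite rise_0 in R.
  exists (rise k A eps z). split; [exact R|]. intros y Hy.
  destruct (xhat_spec y z ltac:(lra) Hz) as [P _].
  rewrite Rminus_0_r, Rabs_right by lra. apply xhat_lt_iff; lra.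
Qed.

Lemma xhat_lim_z_pinfty y : 0 < y -> filterlim (fun z => xhat y z) (Rbar_locally p_infty) (locally 0).
Proof.
  intros Hy. apply filterlim_pinfty_intro. intros eps He.
  destruct (phi_bounds eps He) as [[P _] _].
  exists (y / phi k eps). intros z Hz.
  assert (Hyz : y < z * phi k eps).
  { apply (Rmult_lt_reg_r (/ phi k eps)); [apply Rinv_0_lt_compat; lra|].
    replace (z * phi k eps * / phi k eps) with z by (field; lra). exact Hz. }
  assert (0 < z) by (assert (0 < y / phi k eps) by (apply Rdiv_lt_0_compat; lra); lra).
  destruct (xhat_spec y z Hy ltac:(lra)) as [P' _].
  pose proof (rise_ge eps z He ltac:(lra)).
  rewrite Rminus_0_r, Rabs_right by lra. apply xhat_lt_iff; lra.
Qed.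

Lemma xhat_lim_z_0 y : 0 < y -> filterlim (fun z => xhat y z) (at_right 0) (locally (xhat y 0)).
Proof.
  intros Hy. apply filterlim_at_right_intro. intros eps He.
  destruct (xhat_spec y 0 Hy (Rle_refl 0)) as [P E].
  set (x' := xhat y 0 - eps).
  destruct (Rle_lt_dec x' 0) as [Hx'|Hx'].
  - exists 1. split; [lra|]. intros z Hz.
    pose proof (xhat_lt_z y 0 z Hy (Rle_refl 0) (proj1 Hz)).
    destruct (xhat_spec y z Hy ltac:(lra)) as [Pz _].
    rewrite Rabs_left; unfold x' in Hx'; lra.
  - assert (Hr : rise k A x' 0 < y) by (apply lt_xhat_iff; [lra | lra | lra | unfold x'; lra]).
    destruct (phi_bounds x' Hx') as [[Pp _] _].
    exists ((y - rise k A x' 0) / phi k x'). split; [apply Rdiv_lt_0_compat; lra|].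
    intros z Hz. pose proof (xhat_lt_z y 0 z Hy (Rle_refl 0) (proj1 Hz)).
    assert (x' < xhat y z).
    { apply lt_xhat_iff; try lra.
      replace (rise k A x' z) with (rise k A x' 0 + z * phi k x') by (unfold rise; ring).
      destruct Hz as [_ Hz]. apply (Rmult_lt_compat_r (phi k x')) in Hz; [|lra].
      replace ((0 + (y - rise k A x' 0) / phi k x') * phi k x') with (y - rise k A x' 0) in Hz
        by (field; lra). lra. }
    rewrite Rabs_left; unfold x' in *; lra.
Qed.

End Rise.

(** * First integrals *)

Lemma Derive_eta (f : R -> R) x l : is_derive f x l -> Derive (fun y => f y) x = l.
Proof. apply is_derive_unique. Qed.

Lemma is_derive_0_const (f : R -> R) lo hi : (forall x, lo < x < hi -> is_derive f x 0) ->
  forall x x', lo < x < hi -> lo < x' < hi -> f x = f x'.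
Proof.
  intros H x x' Hx Hx'.
  assert (Hin : forall y, Rmin x x' <= y <= Rmax x x' -> lo < y < hi)
    by (intros y; unfold Rmin, Rmax; destruct (Rle_dec x x'); lra).
  destruct (MVT_gen f x x' (fun _ => 0)) as [c [_ E]]; [| |lra].
  - intros y Hy. apply H, Hin. lra.
  - intros y Hy. apply continuity_pt_filterlim, (@ex_derive_continuous R_AbsRing R_NormedModule).
    exists 0. apply H, Hin, Hy.
Qed.

Lemma is_derive_0_const_ball (f : R -> R) r : (forall x, Rabs x < r -> is_derive f x 0) ->
  forall x, Rabs x < r -> f x = f 0.
Proof.
  intros H x Hx. pose proof (Rabs_pos x).
  apply (is_derive_0_const f (- r) r); try (apply Rabs_lt_between; assumption); [|lra].
  intros y Hy. apply H, Rabs_lt_between, Hy.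
Qed.

Lemma continuous_pos_ball (f : R -> R) r : (forall x, Rabs x < r -> continuity_pt f x) ->
  (forall x, Rabs x < r -> f x <> 0) -> 0 < f 0 -> forall x, Rabs x < r -> 0 < f x.
Proof.
  intros Hc Hn H0 x Hx. destruct (Rlt_or_le 0 (f x)) as [|Hle]; [assumption | exfalso].
  assert (Hin : forall t, 0 <= t <= 1 -> Rabs (t * x) < r)
    by (intros t Ht; rewrite Rabs_mult, Rabs_right by lra; pose proof (Rabs_pos x); nra).
  destruct (Ranalysis5.IVT_interv (fun t => - f (t * x)) 0 1) as [t [Ht Et]];
    [| lra | rewrite Rmult_0_l; lra | rewrite Rmult_1_l; pose proof (Hn x Hx); lra |].
  - intros t Ht. apply continuity_pt_opp, (continuity_pt_comp (fun t => t * x)); [|apply Hc, Hin, Ht].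
    apply continuity_pt_filterlim, (@ex_derive_continuous R_AbsRing R_NormedModule (fun t => t * x)).
    auto_derive. exact I.
  - apply (Hn (t * x)); [apply Hin, Ht | lra].
Qed.

Section FirstIntegrals.

Variable r : R.

Lemma exp_first_integral k (s t ds : R -> R) :
  (forall x, Rabs x < r -> is_derive s x (ds x) /\ is_derive t x (- k * t x * ds x)) ->
  t 0 = exp (- (k * s 0)) -> forall x, Rabs x < r -> t x = exp (- (k * s x)).
Proof.
  intros HD H0 x Hx.
  assert (E : t x * exp (k * s x) = t 0 * exp (k * s 0)).
  { apply (is_derive_0_const_ball (fun x => t x * exp (k * s x)) r); [|exact Hx].
    intros y Hy. destruct (HD y Hy) as [Hs Ht]. auto_derive.
    - repeat split; eexists; eassumption.
    - rewrite (Derive_eta _ _ _ Ht), (Derive_eta _ _ _ Hs). ring. }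
  rewrite H0, <- exp_plus, Rplus_opp_l, exp_0 in E.
  apply (Rmult_eq_reg_r (exp (k * s x))); [|apply Rgt_not_eq, exp_pos].
  rewrite E, <- exp_plus, Rplus_opp_l, exp_0. reflexivity.
Qed.

Lemma inv_first_integral (rho L dL : R -> R) :
  (forall x, Rabs x < r -> is_derive L x (dL x) /\ is_derive rho x (- rho x ^ 2 * dL x) /\ 0 < rho x) ->
  rho 0 * L 0 = 1 -> forall x, Rabs x < r -> rho x * L x = 1.
Proof.
  intros HD H0 x Hx.
  assert (E : / rho x - L x = / rho 0 - L 0).
  { apply (is_derive_0_const_ball (fun x => / rho x - L x) r); [|exact Hx].
    intros y Hy. destruct (HD y Hy) as [HL [Hr Hp]]. auto_derive.
    - repeat split; try (eexists; eassumption). lra.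
    - rewrite (Derive_eta _ _ _ HL), (Derive_eta _ _ _ Hr). field. lra. }
  assert (Hr0 : rho 0 <> 0) by (intros Z; rewrite Z in H0; lra).
  assert (/ rho 0 = L 0) by (apply (Rmult_eq_reg_l (rho 0)); [rewrite Rinv_r; lra | exact Hr0]).
  destruct (HD x Hx) as [_ [_ Hp]].
  replace (L x) with (/ rho x) by lra. field. lra.
Qed.

(* [A - (A - z) exp (- k x)] and [phi k x] are the partial derivatives of [rise k A x z]. *)
Lemma rise_first_integral k A (s z ds dz : R -> R) c : 0 < k ->
  (forall x, Rabs x < r -> is_derive s x (ds x) /\ is_derive z x (dz x) /\
     (A - (A - z x) * exp (- (k * s x))) * ds x + phi k (s x) * dz x = c) ->
  forall x, Rabs x < r -> rise k A (s x) (z x) = rise k A (s 0) (z 0) + c * x.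
Proof.
  intros Hk HD x Hx.
  assert (E : rise k A (s x) (z x) - c * x = rise k A (s 0) (z 0) - c * 0).
  { apply (is_derive_0_const_ball (fun x => rise k A (s x) (z x) - c * x) r); [|exact Hx].
    intros y Hy. destruct (HD y Hy) as [Hs [Hz Hc]]. unfold rise, phi. auto_derive.
    - repeat split; eexists; eassumption.
    - rewrite (Derive_eta _ _ _ Hs), (Derive_eta _ _ _ Hz), <- Hc. unfold phi. field. lra. }
  lra.
Qed.

End FirstIntegrals.

Lemma pos_of_rise_pos k A (s z : R -> R) r : (forall x, Rabs x < r -> ex_derive s x) ->
  (forall x, Rabs x < r -> 0 < rise k A (s x) (z x)) -> 0 < s 0 -> forall x, Rabs x < r -> 0 < s x.
Proof.
  intros Hs Hr H0. apply continuous_pos_ball; [| | exact H0].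
  - intros x Hx. apply continuity_pt_filterlim, (@ex_derive_continuous R_AbsRing R_NormedModule), Hs, Hx.
  - intros x Hx Z. specialize (Hr x Hx). rewrite Z, rise_0 in Hr. lra.
Qed.

(** * Coefficients of the characteristic systems *)

Definition agree_upto {V : Type} (a b : nat -> V) (n : nat) : Prop :=
  forall m, (m <= n)%nat -> a m = b m.

(* Course-of-values recursion: [strong_rec v0 step (S n) = step n (strong_rec v0 step)]
   provided [step n] only reads the values at indices [<= n]. *)
Fixpoint prefix_rec {V : Type} (v0 : V) (step : nat -> (nat -> V) -> V) (n : nat) : nat -> V :=
  match n with
  | O => fun _ => v0
  | S n' => fun m => if Nat.leb m n' then prefix_rec v0 step n' m
                     else step n' (prefix_rec v0 step n')
  end.

Definition strong_rec {V : Type} (v0 : V) (step : nat -> (nat -> V) -> V) (n : nat) : V :=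
  prefix_rec v0 step n n.

Lemma prefix_rec_agree {V : Type} (v0 : V) step n : agree_upto (prefix_rec v0 step n) (strong_rec v0 step) n.
Proof.
  induction n as [|n IH]; intros m Hm.
  - replace m with 0%nat by lia. reflexivity.
  - cbn [prefix_rec]. destruct (Nat.leb m n) eqn:E; [apply IH, Nat.leb_le, E|].
    apply Nat.leb_gt in E. replace m with (S n) by lia.
    unfold strong_rec. cbn [prefix_rec]. rewrite (proj2 (Nat.leb_gt (S n) n)) by lia. reflexivity.
Qed.

Lemma strong_rec_S {V : Type} (v0 : V) step n :
  (forall f g, agree_upto f g n -> step n f = step n g) ->
  strong_rec v0 step (S n) = step n (strong_rec v0 step).
Proof.
  intros Hext. unfold strong_rec at 1. cbn [prefix_rec]. rewrite (proj2 (Nat.leb_gt (S n) n)) by lia.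
  apply Hext, prefix_rec_agree.
Qed.

Section AgreeUpto.

Variable n : nat.
Implicit Types a b : nat -> R.

Lemma agree_upto_mult a b a' b' : agree_upto a a' n -> agree_upto b b' n ->
  agree_upto (PS_mult a b) (PS_mult a' b') n.
Proof.
  intros Ha Hb m Hm. apply sum_eq. intros i Hi. rewrite (Ha i), (Hb (m - i)%nat) by lia. reflexivity.
Qed.

Lemma agree_upto_plus a b a' b' : agree_upto a a' n -> agree_upto b b' n ->
  agree_upto (PS_plus a b) (PS_plus a' b') n.
Proof. intros Ha Hb m Hm. unfold PS_plus. rewrite Ha, Hb by exact Hm. reflexivity. Qed.

Lemma agree_upto_minus a b a' b' : agree_upto a a' n -> agree_upto b b' n ->
  agree_upto (PS_minus a b) (PS_minus a' b') n.
Proof. intros Ha Hb m Hm. unfold PS_minus. rewrite Ha, Hb by exact Hm. reflexivity. Qed.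

Lemma agree_upto_scal c a a' : agree_upto a a' n -> agree_upto (PS_scal c a) (PS_scal c a') n.
Proof. intros Ha m Hm. unfold PS_scal. rewrite Ha by exact Hm. reflexivity. Qed.

Lemma agree_upto_incr_1 a a' : agree_upto a a' n -> agree_upto (PS_incr_1 a) (PS_incr_1 a') n.
Proof. intros Ha [|m] Hm; [reflexivity|]. apply Ha. lia. Qed.

End AgreeUpto.

Ltac solve_agree_upto :=
  repeat first [ assumption | apply agree_upto_mult | apply agree_upto_minus
               | apply agree_upto_plus | apply agree_upto_scal | apply agree_upto_incr_1 ].

Definition s_part {V : Type} (f : nat -> V * V * V) (n : nat) : V := fst (fst (f n)).
Definition t_part {V : Type} (f : nat -> V * V * V) (n : nat) : V := snd (fst (f n)).
Definition rho_part {V : Type} (f : nat -> V * V * V) (n : nat) : V := snd (f n).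

Lemma agree_upto_parts {V : Type} (f g : nat -> V * V * V) n : agree_upto f g n ->
  agree_upto (s_part f) (s_part g) n /\ agree_upto (t_part f) (t_part g) n /\
  agree_upto (rho_part f) (rho_part g) n.
Proof.
  intros H. unfold s_part, t_part, rho_part. repeat split; intros m Hm; rewrite H by exact Hm; reflexivity.
Qed.

(* Power series coefficients of the system [s' = - (1 - t) rho / k], [t' = t (1 - t) rho],
   [rho' = - rho^2 (t - (B0 - w) t')], satisfied along [z = A - B0 + w] by
   [s = xhat y z], [t = exp (- k s)] and [rho = 1 / (A - (A - z) t)]. *)
Definition w_rhs_t (t rho : nat -> R) : nat -> R :=
  PS_minus (PS_mult t rho) (PS_mult (PS_mult t t) rho).
Definition w_rhs_s (k : R) (t rho : nat -> R) : nat -> R :=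
  PS_scal (- / k) (PS_minus rho (PS_mult t rho)).
Definition w_rhs_q (t rho : nat -> R) : nat -> R := PS_mult (PS_mult rho rho) (w_rhs_t t rho).
Definition w_rhs_rho (B0 : R) (t rho : nat -> R) : nat -> R :=
  PS_minus (PS_scal B0 (w_rhs_q t rho))
    (PS_plus (PS_mult (PS_mult rho rho) t) (PS_incr_1 (w_rhs_q t rho))).

Section WAgree.
Variables (n : nat) (t rho t' rho' : nat -> R).
Hypotheses (Ht : agree_upto t t' n) (Hr : agree_upto rho rho' n).

Lemma agree_upto_w_rhs_t : agree_upto (w_rhs_t t rho) (w_rhs_t t' rho') n.
Proof. unfold w_rhs_t. solve_agree_upto. Qed.

Lemma agree_upto_w_rhs_s k : agree_upto (w_rhs_s k t rho) (w_rhs_s k t' rho') n.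
Proof. unfold w_rhs_s. solve_agree_upto. Qed.

Lemma agree_upto_w_rhs_rho B0 : agree_upto (w_rhs_rho B0 t rho) (w_rhs_rho B0 t' rho') n.
Proof. pose proof agree_upto_w_rhs_t. unfold w_rhs_rho, w_rhs_q. solve_agree_upto. Qed.

End WAgree.

Definition w_step (k B0 : R) (n : nat) (f : nat -> R * R * R) : R * R * R :=
  (w_rhs_s k (t_part f) (rho_part f) n / INR (S n),
   w_rhs_t (t_part f) (rho_part f) n / INR (S n),
   w_rhs_rho B0 (t_part f) (rho_part f) n / INR (S n)).

Definition w_coeffs (k B0 s0 t0 r0 : R) : nat -> R * R * R := strong_rec (s0, t0, r0) (w_step k B0).

Lemma w_coeffs_S k B0 s0 t0 r0 n : let f := w_coeffs k B0 s0 t0 r0 in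
  s_part f (S n) = w_rhs_s k (t_part f) (rho_part f) n / INR (S n) /\
  t_part f (S n) = w_rhs_t (t_part f) (rho_part f) n / INR (S n) /\
  rho_part f (S n) = w_rhs_rho B0 (t_part f) (rho_part f) n / INR (S n).
Proof.
  intros f. assert (E : f (S n) = w_step k B0 n f).
  { apply strong_rec_S. intros g h H. destruct (agree_upto_parts g h n H) as [_ [Ht Hr]].
    unfold w_step. rewrite (agree_upto_w_rhs_s _ _ _ _ _ Ht Hr k n),
      (agree_upto_w_rhs_t _ _ _ _ _ Ht Hr n), (agree_upto_w_rhs_rho _ _ _ _ _ Ht Hr B0 n) by lia.
    reflexivity. }
  unfold s_part, t_part, rho_part. rewrite E. repeat split.
Qed.

Lemma w_rhs_majorized k B0 al : 0 <= al -> exists c, 0 <= c /\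
  forall N n t rho, 1 <= N -> majorized_upto t al N n -> majorized_upto rho al N n ->
    majorized_upto (w_rhs_s k t rho) c N n /\ majorized_upto (w_rhs_t t rho) c N n /\
    majorized_upto (w_rhs_rho B0 t rho) c N n.
Proof.
  intros Hal.
  set (cT := 8 * al * al + 8 * (8 * al * al) * al).
  set (cS := Rabs (- / k) * (al + 8 * al * al)).
  set (cQ := 8 * (8 * al * al) * cT).
  set (cR := Rabs B0 * cQ + (8 * (8 * al * al) * al + 4 * cQ)).
  assert (0 <= cT) by (unfold cT; nonneg). assert (0 <= cQ) by (unfold cQ; nonneg).
  assert (0 <= cS) by (unfold cS; nonneg). assert (0 <= cR) by (unfold cR; nonneg).
  exists (cS + cT + cR). split; [lra|]. intros N n t rho HN Ht Hr.
  assert (HT : majorized_upto (w_rhs_t t rho) cT N n) by (unfold w_rhs_t; solve_majorized_upto).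
  assert (HQ : majorized_upto (w_rhs_q t rho) cQ N n) by (unfold w_rhs_q; solve_majorized_upto).
  assert (HS : majorized_upto (w_rhs_s k t rho) cS N n) by (unfold w_rhs_s; solve_majorized_upto).
  assert (HR : majorized_upto (w_rhs_rho B0 t rho) cR N n) by (unfold w_rhs_rho; solve_majorized_upto).
  repeat split; (eapply majorized_upto_weaken; [lra | | eassumption]); lra.
Qed.

Lemma w_coeffs_majorized k B0 s0 t0 r0 al : 1 <= al ->
  Rabs s0 <= al -> Rabs t0 <= al -> Rabs r0 <= al ->
  exists N, 1 <= N /\ let f := w_coeffs k B0 s0 t0 r0 in
    majorized (s_part f) al N /\ majorized (t_part f) al N /\ majorized (rho_part f) al N.
Proof.
  intros Hal Hs Ht Hr. destruct (w_rhs_majorized k B0 al ltac:(lra)) as [c [Hc Hrhs]].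
  exists (1 + 4 * c). split; [lra|]. intros f.
  assert (HcN : 4 * c <= al * (1 + 4 * c)) by nra.
  enough (H : forall n, majorized_upto (s_part f) al (1 + 4 * c) n /\
    majorized_upto (t_part f) al (1 + 4 * c) n /\ majorized_upto (rho_part f) al (1 + 4 * c) n)
    by (repeat split; intros n; apply H).
  induction n as [|n [IS [IT IR]]].
  - repeat split; intros l Hl; replace l with 0%nat by lia; rewrite weight_0, pow_O, !Rmult_1_r;
      assumption.
  - destruct (Hrhs (1 + 4 * c) n _ _ ltac:(lra) IT IR) as [DS [DT DR]].
    destruct (w_coeffs_S k B0 s0 t0 r0 n) as [ES [ET ER]]. fold f in ES, ET, ER.
    repeat split; eapply majorized_upto_succ; eauto; lra.
Qed.

Section WSolution.

Variables (k A B0 al N rad : R) (s t rho : nat -> R).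
Hypotheses (Hk : 0 < k) (HN : 1 <= N)
  (Hrec : forall n, s (S n) = w_rhs_s k t rho n / INR (S n) /\
     t (S n) = w_rhs_t t rho n / INR (S n) /\ rho (S n) = w_rhs_rho B0 t rho n / INR (S n))
  (Hs : majorized s al N) (Ht : majorized t al N) (Hr : majorized rho al N)
  (Ht0 : t 0%nat = exp (- (k * s 0%nat))) (Hr0 : rho 0%nat * (A - B0 * t 0%nat) = 1)
  (Hs0 : 0 < s 0%nat) (Hrho0 : 0 < rho 0%nat) (Hp : 0 < rise k A (s 0%nat) (A - B0))
  (HradN : rad * N <= / 2) (Hradr : rad * (4 * al * N) <= rho 0%nat).

Lemma w_solution_derive w : Rabs w < rad ->
  let S := PSeries s in let T := PSeries t in let R := PSeries rho in
  is_derive S w (- (1 - T w) * R w / k) /\ is_derive T w (T w * (1 - T w) * R w) /\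
  is_derive R w (- R w ^ 2 * (T w - (B0 - w) * (T w * (1 - T w) * R w))).
Proof.
  intros Hw S T R. destruct (lt_radius_bounds rad N w ltac:(lra) HradN Hw) as [Hw1 _].
  assert (Hin : forall a, has_majorant a N -> Rbar_lt (Rabs w) (CV_radius a))
    by (intros a Ha; apply (has_majorant_inside a N w); [lra | exact Ha | exact Hw1]).
  assert (Gt : has_majorant t N) by (exists al; exact Ht).
  assert (Gr : has_majorant rho N) by (exists al; exact Hr).
  assert (Gs : has_majorant s N) by (exists al; exact Hs).
  assert (ET : PSeries (w_rhs_t t rho) w = T w * (1 - T w) * R w)
    by (unfold w_rhs_t; PSeries_expand Hin; unfold T, R; ring).
  split; [|split].
  - replace (- (1 - T w) * R w / k) with (PSeries (w_rhs_s k t rho) w).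
    + apply is_derive_PSeries_rec; [apply Hin; exists al; exact Hs | apply Hrec].
    + unfold w_rhs_s. PSeries_expand Hin. unfold T, R. field. lra.
  - rewrite <- ET. apply is_derive_PSeries_rec; [apply Hin; exact Gt | apply Hrec].
  - replace (- R w ^ 2 * _) with (PSeries (w_rhs_rho B0 t rho) w).
    + apply is_derive_PSeries_rec; [apply Hin; exact Gr | apply Hrec].
    + unfold w_rhs_rho, w_rhs_q. PSeries_expand Hin. rewrite ET. unfold T, R. ring.
Qed.

Lemma w_solution_invariants w : Rabs w < rad ->
  PSeries t w = exp (- (k * PSeries s w)) /\ PSeries rho w * (A - (B0 - w) * PSeries t w) = 1.
Proof.
  set (S := PSeries s). set (T := PSeries t). set (R := PSeries rho).
  assert (HS0 : S 0 = s 0%nat) by apply PSeries_0.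
  assert (HT0 : T 0 = t 0%nat) by apply PSeries_0.
  assert (HR0 : R 0 = rho 0%nat) by apply PSeries_0.
  assert (HD : forall w, Rabs w < rad -> is_derive S w (- (1 - T w) * R w / k) /\
    is_derive T w (T w * (1 - T w) * R w) /\
    is_derive R w (- R w ^ 2 * (T w - (B0 - w) * (T w * (1 - T w) * R w)))) by exact w_solution_derive.
  assert (Rge : forall w, Rabs w < rad -> rho 0%nat / 2 <= R w)
    by (intros; apply (PSeries_ge_half_ball _ al N rad); auto; lra).
  clearbody S T R.
  assert (ET : forall w, Rabs w < rad -> T w = exp (- (k * S w))).
  { apply (exp_first_integral rad k S T (fun w => - (1 - T w) * R w / k)); [|congruence].
    intros x Hx. destruct (HD x Hx) as [H1 [H2 _]]. split; [exact H1|].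
    replace (- k * T x * _) with (T x * (1 - T x) * R x) by (field; lra). exact H2. }
  intros Hw. split; [exact (ET w Hw)|]. revert w Hw.
  apply (inv_first_integral rad R (fun w => A - (B0 - w) * T w)
           (fun w => T w - (B0 - w) * (T w * (1 - T w) * R w))).
  - intros x Hx. destruct (HD x Hx) as [_ [H2 H3]]. pose proof (Rge x Hx).
    split; [|split; [exact H3 | lra]].
    auto_derive; [repeat split; eexists; eassumption|].
    rewrite (Derive_eta _ _ _ H2). ring.
  - rewrite HR0, HT0, Rminus_0_r. exact Hr0.
Qed.

Lemma w_solution w : Rabs w < rad ->
  rise k A (PSeries s w) (A - B0 + w) = rise k A (s 0%nat) (A - B0) /\ 0 < PSeries s w.
Proof.
  pose proof w_solution_invariants as HI.
  set (S := PSeries s) in *. set (T := PSeries t) in *. set (R := PSeries rho) in *.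
  assert (HS0 : S 0 = s 0%nat) by apply PSeries_0.
  assert (HS : forall w, Rabs w < rad -> is_derive S w (- (1 - T w) * R w / k))
    by (intros x Hx; exact (proj1 (w_solution_derive x Hx))).
  clearbody S T R.
  assert (EF : forall w, Rabs w < rad -> rise k A (S w) (A - B0 + w) = rise k A (s 0%nat) (A - B0)).
  { assert (Hrise : forall y, Rabs y < rad -> is_derive S y (- (1 - T y) * R y / k) /\
      is_derive (fun w => A - B0 + w) y 1 /\
      (A - (A - (A - B0 + y)) * exp (- (k * S y))) * (- (1 - T y) * R y / k) + phi k (S y) * 1 = 0).
    { intros y Hy. destruct (HI y Hy) as [ET ER].
      split; [exact (HS y Hy) | split; [auto_derive; [exact I | ring] |]].
      unfold phi. rewrite <- ET. replace (A - (A - (A - B0 + y)) * T y) with (A - (B0 - y) * T y) by ring.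
      transitivity ((1 - T y) / k * (1 - R y * (A - (B0 - y) * T y))); [field | rewrite ER; field]; lra. }
    intros x Hx. pose proof (rise_first_integral rad k A S (fun w => A - B0 + w) _ _ 0 Hk Hrise x Hx) as F.
    cbv beta in F. rewrite HS0, Rplus_0_r in F. lra. }
  intros Hw. split; [exact (EF w Hw)|].
  apply (pos_of_rise_pos k A S (fun w => A - B0 + w) rad); [| | rewrite HS0; exact Hs0 | exact Hw].
  - intros x Hx. eexists. exact (HS x Hx).
  - intros x Hx. rewrite (EF x Hx). exact Hp.
Qed.

End WSolution.

(* Power series coefficients of the system [s' = rho], [t' = - k t rho], [rho' = - k B t rho^3],
   satisfied along [y = p + tau] with [z = A - B] fixed by [s = xhat y z], [t = exp (- k s)]
   and [rho = 1 / (A - B t)]. *)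
Definition tau_rhs_t (k : R) (t rho : nat -> R) : nat -> R := PS_scal (- k) (PS_mult t rho).
Definition tau_rhs_rho (k B : R) (t rho : nat -> R) : nat -> R :=
  PS_scal (- k * B) (PS_mult (PS_mult (PS_mult t rho) rho) rho).

Section TauSolution.

Variables (k A B C M rad : R) (s t rho : nat -> R).
Hypotheses (Hk : 0 < k) (HM : 1 <= M)
  (Hrec : forall n, s (S n) = rho n / INR (S n) /\
     t (S n) = tau_rhs_t k t rho n / INR (S n) /\ rho (S n) = tau_rhs_rho k B t rho n / INR (S n))
  (Hs : majorized s C M) (Ht : majorized t C M) (Hr : majorized rho C M)
  (Ht0 : t 0%nat = exp (- (k * s 0%nat))) (Hr0 : rho 0%nat * (A - B * t 0%nat) = 1)
  (Hs0 : 0 < s 0%nat) (Hrho0 : 0 < rho 0%nat)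
  (HradM : rad * M <= / 2) (Hradr : rad * (4 * C * M) <= rho 0%nat)
  (Hradp : rad <= rise k A (s 0%nat) (A - B)).

Lemma tau_solution_derive x : Rabs x < rad ->
  let S := PSeries s in let T := PSeries t in let R := PSeries rho in
  is_derive S x (R x) /\ is_derive T x (- k * T x * R x) /\
  is_derive R x (- R x ^ 2 * (k * B * T x * R x)).
Proof.
  intros Hx S T R. destruct (lt_radius_bounds rad M x ltac:(lra) HradM Hx) as [Hx1 _].
  assert (Hin : forall a, has_majorant a M -> Rbar_lt (Rabs x) (CV_radius a))
    by (intros a Ha; apply (has_majorant_inside a M x); [lra | exact Ha | exact Hx1]).
  assert (Gt : has_majorant t M) by (exists C; exact Ht).
  assert (Gr : has_majorant rho M) by (exists C; exact Hr).
  split; [|split].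
  - apply is_derive_PSeries_rec; [apply Hin; exists C; exact Hs | apply Hrec].
  - replace (- k * T x * R x) with (PSeries (tau_rhs_t k t rho) x).
    + apply is_derive_PSeries_rec; [apply Hin; exact Gt | apply Hrec].
    + unfold tau_rhs_t. PSeries_expand Hin. unfold T, R. ring.
  - replace (- R x ^ 2 * _) with (PSeries (tau_rhs_rho k B t rho) x).
    + apply is_derive_PSeries_rec; [apply Hin; exact Gr | apply Hrec].
    + unfold tau_rhs_rho. PSeries_expand Hin. unfold T, R. ring.
Qed.

Lemma tau_solution x : Rabs x < rad ->
  rise k A (PSeries s x) (A - B) = rise k A (s 0%nat) (A - B) + x /\ 0 < PSeries s x.
Proof.
  set (S := PSeries s). set (T := PSeries t). set (R := PSeries rho).
  assert (HS0 : S 0 = s 0%nat) by apply PSeries_0.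
  assert (HT0 : T 0 = t 0%nat) by apply PSeries_0.
  assert (HR0 : R 0 = rho 0%nat) by apply PSeries_0.
  assert (HD : forall x, Rabs x < rad -> is_derive S x (R x) /\ is_derive T x (- k * T x * R x) /\
    is_derive R x (- R x ^ 2 * (k * B * T x * R x))) by exact tau_solution_derive.
  assert (Rge : forall x, Rabs x < rad -> rho 0%nat / 2 <= R x)
    by (intros; apply (PSeries_ge_half_ball _ C M rad); auto; lra).
  clearbody S T R.
  assert (ET : forall x, Rabs x < rad -> T x = exp (- (k * S x))).
  { apply (exp_first_integral rad k S T R); [|congruence].
    intros y Hy. destruct (HD y Hy) as [H1 [H2 _]]. split; assumption. }
  assert (ER : forall x, Rabs x < rad -> R x * (A - B * T x) = 1).
  { apply (inv_first_integral rad R (fun x => A - B * T x) (fun x => k * B * T x * R x)).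
    - intros y Hy. destruct (HD y Hy) as [_ [H2 H3]].
      split; [|split; [exact H3 | pose proof (Rge y Hy); lra]].
      auto_derive; [repeat split; eexists; eassumption|].
      rewrite (Derive_eta _ _ _ H2). ring.
    - rewrite HR0, HT0. exact Hr0. }
  assert (EF : forall x, Rabs x < rad -> rise k A (S x) (A - B) = rise k A (s 0%nat) (A - B) + x).
  { assert (Hrise : forall y, Rabs y < rad -> is_derive S y (R y) /\
      is_derive (fun _ => A - B) y 0 /\
      (A - (A - (A - B)) * exp (- (k * S y))) * R y + phi k (S y) * 0 = 1).
    { intros y Hy. destruct (HD y Hy) as [H1 _].
      split; [exact H1 | split; [auto_derive; [exact I | ring] |]].
      rewrite <- (ET y Hy), <- (ER y Hy). ring. }
    intros y Hy. pose proof (rise_first_integral rad k A S (fun _ => A - B) _ _ 1 Hk Hrise y Hy) as F.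
    cbv beta in F. rewrite HS0, Rmult_1_l in F. exact F. }
  intros Hx. split; [exact (EF x Hx)|].
  apply (pos_of_rise_pos k A S (fun _ => A - B) rad); [| | rewrite HS0; exact Hs0 | exact Hx].
  - intros y Hy. eexists. exact (proj1 (HD y Hy)).
  - intros y Hy. rewrite (EF y Hy). pose proof (Rabs_maj2 y). lra.
Qed.

End TauSolution.

Definition PS_mult2 (a b : nat -> nat -> R) (i : nat) : nat -> R :=
  fun j => sum_f_R0 (fun l => PS_mult (a l) (b (i - l)%nat) j) i.

Lemma agree_upto_mult2 (a b a' b' : nat -> nat -> R) n : agree_upto a a' n -> agree_upto b b' n ->
  agree_upto (PS_mult2 a b) (PS_mult2 a' b') n.
Proof.
  intros Ha Hb m Hm. apply functional_extensionality. intros j.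
  apply sum_eq. intros l Hl. rewrite (Ha l), (Hb (m - l)%nat) by lia. reflexivity.
Qed.

Definition tau_rows_q (t rho : nat -> nat -> R) : nat -> nat -> R :=
  PS_mult2 (PS_mult2 (PS_mult2 t rho) rho) rho.

(* Row [i] of [tau_coeffs k B0 s t rho] holds the power series in [w] of the [i]-th Taylor
   coefficient in [tau] of the solution of the [tau]-system with [B = B0 - w]; multiplication
   by [B0 - w] acts on a row [r] as [PS_scal B0 r - PS_incr_1 r]. *)
Definition tau_step (k B0 : R) (i : nat) (f : nat -> (nat -> R) * (nat -> R) * (nat -> R)) :
    (nat -> R) * (nat -> R) * (nat -> R) :=
  (fun j => rho_part f i j / INR (S i),
   fun j => PS_scal (- k) (PS_mult2 (t_part f) (rho_part f) i) j / INR (S i),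
   fun j => PS_scal (- k) (PS_minus (PS_scal B0 (tau_rows_q (t_part f) (rho_part f) i))
                                   (PS_incr_1 (tau_rows_q (t_part f) (rho_part f) i))) j / INR (S i)).

Definition tau_coeffs (k B0 : R) (s t rho : nat -> R) := strong_rec (s, t, rho) (tau_step k B0).

Lemma tau_coeffs_S k B0 s t rho i j : let f := tau_coeffs k B0 s t rho in
  s_part f (S i) j = rho_part f i j / INR (S i) /\
  t_part f (S i) j = PS_scal (- k) (PS_mult2 (t_part f) (rho_part f) i) j / INR (S i) /\
  rho_part f (S i) j = PS_scal (- k) (PS_minus (PS_scal B0 (tau_rows_q (t_part f) (rho_part f) i))
                                        (PS_incr_1 (tau_rows_q (t_part f) (rho_part f) i))) j / INR (S i).
Proof.
  intros f. assert (E : f (S i) = tau_step k B0 i f).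
  { apply strong_rec_S. intros g h H. destruct (agree_upto_parts g h i H) as [_ [Ht Hr]].
    assert (Hq : agree_upto (tau_rows_q (t_part g) (rho_part g)) (tau_rows_q (t_part h) (rho_part h)) i)
      by (unfold tau_rows_q; repeat apply agree_upto_mult2; assumption).
    unfold tau_step. rewrite (Hr i), (agree_upto_mult2 _ _ _ _ i Ht Hr i), (Hq i) by lia.
    reflexivity. }
  unfold s_part, t_part, rho_part. rewrite E. repeat split.
Qed.

Definition majorized2_upto (a : nat -> nat -> R) (C M N : R) (i : nat) : Prop :=
  forall l, (l <= i)%nat -> majorized (a l) (C * M ^ l * weight l) N.

Lemma majorized2_upto_ge0 a C M N i : majorized2_upto a C M N i -> 0 <= C.
Proof.
  intros Ha. pose proof (majorized_upto_ge0 N 0 _ _ (Ha 0%nat (Nat.le_0_l _) 0%nat)) as H.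
  rewrite weight_0, pow_O, !Rmult_1_r in H. exact H.
Qed.

Lemma majorized2_upto_mult a b Ca Cb M N i : 0 <= M -> 0 <= N ->
  majorized2_upto a Ca M N i -> majorized2_upto b Cb M N i ->
  majorized2_upto (PS_mult2 a b) (64 * Ca * Cb) M N i.
Proof.
  intros HM HN Ha Hb l Hl n j Hj.
  pose proof (majorized2_upto_ge0 _ _ _ _ _ Ha). pose proof (majorized2_upto_ge0 _ _ _ _ _ Hb).
  unfold PS_mult2. eapply Rle_trans; [apply sum_f_R0_triangle|].
  eapply Rle_trans.
  { apply sum_Rle. intros m Hm.
    apply (majorized_upto_mult N j _ _ _ _ HN (Ha m ltac:(lia) j) (Hb (l - m)%nat ltac:(lia) j) j (le_n j)). }
  pose proof (weight_pos j). pose proof (pow_le N j HN). pose proof (pow_le M l HM).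
  rewrite (sum_eq _ (fun m => (weight m * weight (l - m)) * (8 * Ca * Cb * M ^ l * (N ^ j * weight j)))).
  2: { intros m Hm. replace (M ^ l) with (M ^ m * M ^ (l - m)); [ring|].
       rewrite <- pow_add. f_equal. lia. }
  rewrite <- scal_sum, Rmult_comm.
  replace (64 * Ca * Cb * M ^ l * weight l * N ^ j * weight j)
    with (8 * weight l * (8 * Ca * Cb * M ^ l * (N ^ j * weight j))) by ring.
  apply Rmult_le_compat_r; [nonneg | apply weight_conv_le].
Qed.

Lemma majorized2_upto_succ (a : nat -> nat -> R) d c C M N i : 0 <= c -> 0 < M -> 0 <= N ->
  4 * c <= C * M -> (forall j, a (S i) j = d j / INR (S i)) ->
  majorized2_upto a C M N i -> majorized d (c * M ^ i * weight i) N ->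
  majorized2_upto a C M N (S i).
Proof.
  intros Hc HM HN HcC Ha Hi Hd l Hl. destruct (Nat.eq_dec l (S i)) as [->|]; [|apply Hi; lia].
  intros n j Hj. rewrite Ha. pose proof (weight_pos j). pose proof (pow_le N j HN).
  replace (C * M ^ S i * weight (S i) * N ^ j * weight j)
    with (C * M ^ S i * weight (S i) * (N ^ j * weight j)) by ring.
  apply majorant_step_bound with c; try nonneg; try lra.
  replace (c * M ^ i * weight i * (N ^ j * weight j)) with (c * M ^ i * weight i * N ^ j * weight j) by ring.
  apply (Hd j j (le_n j)).
Qed.

Lemma majorized2_le_geom a C M N : 0 <= M -> 0 <= N -> (forall i, majorized2_upto a C M N i) ->
  forall i j, Rabs (a i j) <= C * M ^ i * N ^ j.
Proof.
  intros HM HN Ha i j.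
  pose proof (majorized_le_geom _ _ N HN (Ha i i (le_n i)) j) as H.
  pose proof (majorized2_upto_ge0 _ _ _ _ _ (Ha i)).
  pose proof (weight_le_1 i). pose proof (weight_pos i). pose proof (pow_le M i HM). pose proof (pow_le N j HN).
  eapply Rle_trans; [exact H|]. apply Rmult_le_compat_r; [lra|].
  rewrite <- (Rmult_1_r (C * M ^ i)) at 2. apply Rmult_le_compat_l; [nonneg | lra].
Qed.

Lemma tau_coeffs_majorized k B0 s t rho al N : 1 <= al -> 1 <= N ->
  majorized s al N -> majorized t al N -> majorized rho al N ->
  exists M, 1 <= M /\ let f := tau_coeffs k B0 s t rho in forall i,
    majorized2_upto (s_part f) al M N i /\ majorized2_upto (t_part f) al M N i /\
    majorized2_upto (rho_part f) al M N i.
Proof.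
  intros Hal HN Hs Ht Hr.
  set (cT := Rabs (- k) * (64 * al * al)).
  set (cQ := 64 * (64 * (64 * al * al) * al) * al).
  set (cR := Rabs (- k) * (Rabs B0 * cQ + 4 * cQ)).
  assert (0 <= cT) by (unfold cT; nonneg). assert (0 <= cQ) by (unfold cQ; nonneg).
  assert (0 <= cR) by (unfold cR; nonneg).
  set (M := 4 + 4 * (cT + cR)). exists M. split; [unfold M; lra|]. intros f.
  assert (M <= al * M) by (unfold M; nra). assert (4 <= M) by (unfold M; lra).
  assert (4 * al <= al * M /\ 4 * cT <= al * M /\ 4 * cR <= al * M) as [? [? ?]]
    by (unfold M in *; repeat split; nra).
  induction i as [|i [IS [IT IR]]].
  - repeat split; intros l Hl; replace l with 0%nat by lia;
      rewrite weight_0, pow_O, !Rmult_1_r; assumption.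
  - assert (HQ : majorized2_upto (tau_rows_q (t_part f) (rho_part f)) cQ M N i)
      by (unfold tau_rows_q, cQ; repeat apply majorized2_upto_mult; unfold M; lra || assumption).
    assert (HTR := majorized2_upto_mult _ _ _ _ M N i ltac:(unfold M; lra) ltac:(lra) IT IR).
    specialize (HQ i (le_n i)). specialize (HTR i (le_n i)). pose proof (IR i (le_n i)) as IRi.
    repeat split.
    + apply (majorized2_upto_succ _ (rho_part f i) al al M N i); try lra;
        [intros j; exact (proj1 (tau_coeffs_S k B0 s t rho i j)) | exact IS | exact IRi].
    + apply (majorized2_upto_succ _ (PS_scal (- k) (PS_mult2 (t_part f) (rho_part f) i)) cT al M N i);
        try lra; [intros j; exact (proj1 (proj2 (tau_coeffs_S k B0 s t rho i j))) | exact IT |].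
      intros n. eapply majorized_upto_weaken; [lra | | apply majorized_upto_scal, HTR].
      right. unfold cT. ring.
    + apply (majorized2_upto_succ _ (PS_scal (- k) (PS_minus (PS_scal B0 (tau_rows_q (t_part f) (rho_part f) i))
        (PS_incr_1 (tau_rows_q (t_part f) (rho_part f) i)))) cR al M N i);
        try lra; [intros j; exact (proj2 (proj2 (tau_coeffs_S k B0 s t rho i j))) | exact IR |].
      intros n. eapply majorized_upto_weaken; [lra | | solve_majorized_upto].
      right. unfold cR. ring.
Qed.

Definition eval_rows (a : nat -> nat -> R) (w : R) (i : nat) : R := PSeries (a i) w.

Lemma eval_rows_majorized a C M N w : 0 <= N -> N * Rabs w <= / 2 ->
  (forall i, majorized2_upto a C M N i) -> majorized (eval_rows a w) (2 * C) M.
Proof.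
  intros HN Hw Ha n l Hl. unfold eval_rows.
  destruct (PSeries_geom_bound (a l) _ N w (majorized_le_geom _ _ N HN (Ha l l (le_n l))) HN Hw) as [_ B].
  replace (2 * C * M ^ l * weight l) with (2 * (C * M ^ l * weight l)) by ring. exact B.
Qed.

Lemma majorized2_rows a C M N : (forall i, majorized2_upto a C M N i) -> forall l, has_majorant (a l) N.
Proof. intros Ha l. exists (C * M ^ l * weight l). apply (Ha l l (le_n l)). Qed.

Lemma PSeries_sum_f_R0 (F : nat -> nat -> R) i x : (forall l, ex_pseries (F l) x) ->
  PSeries (fun n => sum_f_R0 (fun l => F l n) i) x = sum_f_R0 (fun l => PSeries (F l) x) i.
Proof.
  intros H.
  enough (E : ex_pseries (fun n => sum_f_R0 (fun l => F l n) i) x /\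
              PSeries (fun n => sum_f_R0 (fun l => F l n) i) x = sum_f_R0 (fun l => PSeries (F l) x) i)
    by apply E.
  induction i as [|i [IHe IHs]]; [split; [apply H | reflexivity]|].
  split; [apply (ex_pseries_plus _ _ _ IHe (H (S i)))|].
  simpl. rewrite <- IHs. apply (PSeries_plus _ _ _ IHe (H (S i))).
Qed.

Lemma eval_rows_mult2 (a b : nat -> nat -> R) N w i : 0 < N -> Rabs w < / N ->
  (forall l, has_majorant (a l) N) -> (forall l, has_majorant (b l) N) ->
  eval_rows (PS_mult2 a b) w i = PS_mult (eval_rows a w) (eval_rows b w) i.
Proof.
  intros HN Hw Ha Hb. unfold eval_rows, PS_mult2, PS_mult.
  assert (Hin : forall e, has_majorant e N -> Rbar_lt (Rabs w) (CV_radius e))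
    by (intros e He; apply (has_majorant_inside e N w HN He Hw)).
  rewrite PSeries_sum_f_R0.
  - apply sum_eq. intros l _. apply PSeries_mult; apply Hin; auto.
  - intros l. apply CV_radius_inside, Hin, has_majorant_mult; auto; lra.
Qed.

Lemma majorized2_mult_eval_rows M N w : 0 <= M -> 1 <= N -> Rabs w < / N ->
  forall a b Ca Cb, (forall i, majorized2_upto a Ca M N i) -> (forall i, majorized2_upto b Cb M N i) ->
  (forall i, majorized2_upto (PS_mult2 a b) (64 * Ca * Cb) M N i) /\
  forall i, eval_rows (PS_mult2 a b) w i = PS_mult (eval_rows a w) (eval_rows b w) i.
Proof.
  intros HM HN Hw a b Ca Cb Ha Hb. split; [intros i; apply majorized2_upto_mult; auto; lra|].
  intros i. apply (eval_rows_mult2 a b N); [lra | exact Hw | |]; eapply majorized2_rows; eauto.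
Qed.

Lemma eval_rows_succ (a : nat -> nat -> R) d w i : (forall j, a (S i) j = d j / INR (S i)) ->
  eval_rows a w (S i) = PSeries d w / INR (S i).
Proof. intros Hd. unfold eval_rows. rewrite <- PSeries_div. apply PSeries_ext. exact Hd. Qed.

Lemma eval_rows_tau_rows_q (t rho : nat -> nat -> R) C M N w : 0 <= M -> 1 <= N -> Rabs w < / N ->
  (forall i, majorized2_upto t C M N i) -> (forall i, majorized2_upto rho C M N i) ->
  (forall i, has_majorant (tau_rows_q t rho i) N) /\
  forall i, eval_rows (tau_rows_q t rho) w i =
    PS_mult (PS_mult (PS_mult (eval_rows t w) (eval_rows rho w)) (eval_rows rho w)) (eval_rows rho w) i.
Proof.
  intros HM HN Hw HT HR.
  pose proof (majorized2_mult_eval_rows M N w HM HN Hw) as Mul.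
  destruct (Mul _ _ _ _ HT HR) as [HTR ETR].
  destruct (Mul _ _ _ _ HTR HR) as [HTRR ETRR].
  destruct (Mul _ _ _ _ HTRR HR) as [HQ EQ].
  split; [eapply majorized2_rows, HQ|]. intros i. unfold tau_rows_q. rewrite EQ.
  replace (eval_rows (PS_mult2 (PS_mult2 t rho) rho) w)
    with (PS_mult (PS_mult (eval_rows t w) (eval_rows rho w)) (eval_rows rho w)); [reflexivity|].
  apply functional_extensionality. intros j. rewrite ETRR.
  rewrite (functional_extensionality _ _ ETR). reflexivity.
Qed.

Lemma tau_eval_rec k B0 s t rho al M N w : 0 <= M -> 1 <= N -> Rabs w < / N ->
  let f := tau_coeffs k B0 s t rho in
  (forall i, majorized2_upto (t_part f) al M N i) -> (forall i, majorized2_upto (rho_part f) al M N i) ->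
  let es := eval_rows (s_part f) w in let et := eval_rows (t_part f) w in
  let er := eval_rows (rho_part f) w in
  forall i, es (S i) = er i / INR (S i) /\ et (S i) = tau_rhs_t k et er i / INR (S i) /\
            er (S i) = tau_rhs_rho k (B0 - w) et er i / INR (S i).
Proof.
  intros HM HN Hw f HT HR es et er i.
  destruct (eval_rows_tau_rows_q _ _ _ _ _ w HM HN Hw HT HR) as [GQ EQ].
  assert (Hin : Rbar_lt (Rabs w) (CV_radius (tau_rows_q (t_part f) (rho_part f) i)))
    by (apply (has_majorant_inside _ N w); [lra | apply GQ | exact Hw]).
  unfold es, et, er. split; [|split].
  - rewrite (eval_rows_succ _ (rho_part f i)) by (intros j; exact (proj1 (tau_coeffs_S k B0 s t rho i j))).
    reflexivity.
  - rewrite (eval_rows_succ _ (PS_scal (- k) (PS_mult2 (t_part f) (rho_part f) i)))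
      by (intros j; exact (proj1 (proj2 (tau_coeffs_S k B0 s t rho i j)))).
    rewrite PSeries_scal. fold (eval_rows (PS_mult2 (t_part f) (rho_part f)) w i).
    rewrite (proj2 (majorized2_mult_eval_rows M N w HM HN Hw _ _ _ _ HT HR)). reflexivity.
  - rewrite (eval_rows_succ _ (PS_scal (- k) (PS_minus (PS_scal B0 (tau_rows_q (t_part f) (rho_part f) i))
                                   (PS_incr_1 (tau_rows_q (t_part f) (rho_part f) i)))))
      by (intros j; exact (proj2 (proj2 (tau_coeffs_S k B0 s t rho i j)))).
    rewrite PSeries_scal, PSeries_minus, PSeries_scal, PSeries_incr_1.
    + change (PSeries (tau_rows_q (t_part f) (rho_part f) i) w)
        with (eval_rows (tau_rows_q (t_part f) (rho_part f)) w i).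
      rewrite EQ. unfold tau_rhs_rho. change (PS_scal ?c ?a i) with (c * a i). field.
      apply not_0_INR. lia.
    + apply ex_pseries_scal; [apply Rmult_comm | apply CV_radius_inside, Hin].
    + apply ex_pseries_incr_1, CV_radius_inside, Hin.
Qed.

(** * Local expansion and analyticity of the free boundary *)

Lemma radius_choice al M N L p : 1 <= al -> 1 <= M -> 1 <= N -> 0 < L -> 0 < p ->
  exists r, 0 < r /\ r <= p /\ r * N <= / 2 /\ r * M <= / 2 /\ r * (16 * al * M * N) <= / L.
Proof.
  intros Hal HM HN HL Hp.
  assert (1 <= al * M) by nra. assert (1 <= al * N) by nra.
  assert (HNP : N <= al * M * N) by nra.
  assert (HMP : M <= al * M * N) by (replace (al * M * N) with (al * N * M) by ring; nra).
  set (P := al * M * N) in *. assert (HPL : 0 <= P * L) by nra.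
  set (D := 16 * P * (1 + L)). assert (HD : 0 < D) by (unfold D; nra).
  exists (Rmin (/ D) p). set (r := Rmin (/ D) p).
  assert (Hr0 : 0 < r) by (apply Rmin_glb_lt; [apply Rinv_0_lt_compat|]; lra).
  assert (HrX : forall X, X <= D -> r * X <= 1).
  { intros X HX. destruct (Rle_lt_dec X 0); [nra|].
    apply Rle_trans with (/ D * D); [apply Rmult_le_compat; try lra; apply Rmin_l | right; field; lra]. }
  split; [exact Hr0 | split; [apply Rmin_r | split; [|split]]].
  - assert (r * (2 * N) <= 1) by (apply HrX; unfold D; lra). lra.
  - assert (r * (2 * M) <= 1) by (apply HrX; unfold D; lra). lra.
  - assert (r * (16 * al * M * N * L) <= 1)
      by (apply HrX; replace (16 * al * M * N * L) with (16 * (P * L)) by (unfold P; ring); unfold D; lra).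
    apply (Rmult_le_reg_r L); [exact HL|]. rewrite Rinv_l; lra.
Qed.

Lemma w_coeffs_solution k A q x0 al N r : 0 < k -> 0 < A -> 0 <= q -> 0 < x0 ->
  let t0 := exp (- (k * x0)) in let L := A - (A - q) * t0 in
  let f := w_coeffs k (A - q) x0 t0 (/ L) in
  1 <= N -> majorized (s_part f) al N -> majorized (t_part f) al N -> majorized (rho_part f) al N ->
  r * N <= / 2 -> r * (4 * al * N) <= / L ->
  forall w, Rabs w < r ->
    rise k A (PSeries (s_part f) w) (q + w) = rise k A x0 q /\
    PSeries (t_part f) w = exp (- (k * PSeries (s_part f) w)) /\
    PSeries (rho_part f) w * (A - (A - q - w) * PSeries (t_part f) w) = 1 /\
    / L / 2 <= PSeries (rho_part f) w /\ 0 < PSeries (s_part f) w.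
Proof.
  intros Hk HA Hq Hx0 t0 L f HN Hs Ht Hr HrN HrL w Hw.
  assert (Ht0 : 0 < t0 < 1) by (split; [apply exp_pos | rewrite <- exp_0; apply exp_increasing; nra]).
  assert (HL0 : 0 < L) by (unfold L; nra). assert (HL : 0 < / L) by (apply Rinv_0_lt_compat, HL0).
  assert (Hp : 0 < rise k A x0 (A - (A - q))).
  { replace (A - (A - q)) with q by ring.
    pose proof (rise_lt k A Hk HA 0 x0 q Hq (Rle_refl 0) Hx0). rewrite rise_0 in *. lra. }
  assert (HL1 : / L * (A - (A - q) * t0) = 1) by (change (/ L * L = 1); field; lra).
  pose proof (w_coeffs_S k (A - q) x0 t0 (/ L)) as Hrec. fold f in Hrec.
  destruct (w_solution k A (A - q) al N r (s_part f) (t_part f) (rho_part f)) with (w := w)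
    as [W1 W5]; try assumption; try reflexivity.
  destruct (w_solution_invariants k A (A - q) al N r (s_part f) (t_part f) (rho_part f)) with (w := w)
    as [W2 W3]; try assumption; try reflexivity.
  replace (A - (A - q) + w) with (q + w) in W1 by ring. replace (A - (A - q)) with q in W1 by ring.
  repeat split; try assumption.
  apply (PSeries_ge_half_ball _ al N r w Hr ltac:(lra) HrN HrL Hw).
Qed.

Lemma xhat_tau_expansion k A B0 (s t rho : nat -> R) al M N w rad :
  0 < k -> 0 < A -> 1 <= M -> 1 <= N -> Rabs w < / N -> N * Rabs w <= / 2 ->
  (forall i, let f := tau_coeffs k B0 s t rho in majorized2_upto (s_part f) al M N i /\
     majorized2_upto (t_part f) al M N i /\ majorized2_upto (rho_part f) al M N i) ->
  PSeries t w = exp (- (k * PSeries s w)) -> PSeries rho w * (A - (B0 - w) * PSeries t w) = 1 ->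
  0 < PSeries s w -> 0 < PSeries rho w -> 0 <= A - B0 + w ->
  rad * M <= / 2 -> rad * (8 * al * M) <= PSeries rho w ->
  rad <= rise k A (PSeries s w) (A - B0 + w) ->
  forall tau, Rabs tau < rad -> PSeries (eval_rows (s_part (tau_coeffs k B0 s t rho)) w) tau =
    xhat k A (rise k A (PSeries s w) (A - B0 + w) + tau) (A - B0 + w).
Proof.
  intros Hk HA HM HN Hw1 Hw2 HB Ht0 Hr0 Hs0 Hrho0 Hz HradM Hradr Hradp tau Htau.
  set (g := tau_coeffs k B0 s t rho) in *.
  replace (A - B0 + w) with (A - (B0 - w)) in * by ring.
  destruct (tau_solution k A (B0 - w) (2 * al) M rad (eval_rows (s_part g) w) (eval_rows (t_part g) w)
              (eval_rows (rho_part g) w)) with (x := tau) as [T1 T2]; try assumption; try lra.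
  - apply (tau_eval_rec k B0 _ _ _ al M N w); try lra; intros i; apply HB.
  - apply (eval_rows_majorized _ _ _ N); try lra; intros i; apply HB.
  - apply (eval_rows_majorized _ _ _ N); try lra; intros i; apply HB.
  - apply (eval_rows_majorized _ _ _ N); try lra; intros i; apply HB.
  - replace (4 * (2 * al) * M) with (8 * al * M) by ring. exact Hradr.
  - symmetry. apply (xhat_unique k A Hk HA); [lra | exact T2 | exact T1].
Qed.

Lemma xhat_local_expansion k A p q : 0 < k -> 0 < A -> 0 < p -> 0 <= q ->
  exists (c : nat -> nat -> R) (C M N r : R), 0 < r /\ 0 < M /\ 0 < N /\
    r * M <= / 2 /\ r * N <= / 2 /\ (forall i j, Rabs (c i j) <= C * M ^ i * N ^ j) /\
    forall tau w, Rabs tau < r -> Rabs w < r -> 0 <= q + w ->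
      PSeries (fun i => PSeries (c i) w) tau = xhat k A (p + tau) (q + w).
Proof.
  intros Hk HA Hp Hq.
  destruct (xhat_spec k A Hk HA p q Hp Hq) as [Hx0 Ex0].
  set (x0 := xhat k A p q) in *. set (B0 := A - q). set (t0 := exp (- (k * x0))).
  assert (Ht0 : 0 < t0 < 1) by (split; [apply exp_pos | rewrite <- exp_0; apply exp_increasing; nra]).
  set (L := A - B0 * t0). assert (HL : 0 < L) by (unfold L, B0; nra).
  assert (HLi : 0 < / L) by (apply Rinv_0_lt_compat, HL).
  set (al := 1 + Rabs x0 + Rabs t0 + Rabs (/ L)).
  pose proof (Rabs_pos x0). pose proof (Rabs_pos t0). pose proof (Rabs_pos (/ L)).
  destruct (w_coeffs_majorized k B0 x0 t0 (/ L) al) as [N [HN [Hs [Ht Hr]]]]; try (unfold al; lra).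
  set (f := w_coeffs k B0 x0 t0 (/ L)) in *.
  destruct (tau_coeffs_majorized k B0 (s_part f) (t_part f) (rho_part f) al N) as [M [HM HB]];
    try (unfold al; lra); try assumption.
  set (g := tau_coeffs k B0 (s_part f) (t_part f) (rho_part f)) in *.
  assert (Hal : 1 <= al) by (unfold al; lra).
  destruct (radius_choice al M N L p) as [r [Hr0 [Hrp [HrN [HrM HrL]]]]]; try lra.
  assert (0 <= al * M) by nra. assert (0 <= al * N) by nra.
  exists (s_part g), al, M, N, r.
  repeat split; try lra.
  - apply majorized2_le_geom; try lra. intros i. apply HB.
  - intros tau w Htau Hw Hqw.
    destruct (w_coeffs_solution k A q x0 al N r) with (w := w) as [W1 [W2 [W3 [W4 W5]]]]; try assumption.
    { change (r * (4 * al * N) <= / L).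
      assert (r * (4 * al * N) <= r * (16 * al * M * N)) by (apply Rmult_le_compat_l; nra). lra. }
    change (w_coeffs k (A - q) x0 _ _) with f in *.
    change (/ (A - (A - q) * exp (- (k * x0)))) with (/ L) in W4.
    destruct (lt_radius_bounds r N w ltac:(lra) HrN Hw) as [Hw1 Hw2].
    rewrite <- Ex0, <- W1. replace (q + w) with (A - B0 + w) in * by (unfold B0; ring).
    apply (xhat_tau_expansion k A B0 _ _ _ al M N w r); try assumption; try lra.
    assert (r * (8 * al * M) * 2 <= r * (16 * al * M * N))
      by (rewrite Rmult_assoc; apply Rmult_le_compat_l; nra). lra.
Qed.

Lemma double_series_geom (c : nat -> nat -> R) C M N x y :
  (forall i j, Rabs (c i j) <= C * M ^ i * N ^ j) -> 0 <= M -> 0 <= N ->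
  M * Rabs x <= / 2 -> N * Rabs y <= / 2 ->
  (forall i, ex_series (fun j => Rabs (c i j) * Rabs x ^ i * Rabs y ^ j)) /\
  ex_series (fun i => Series (fun j => Rabs (c i j) * Rabs x ^ i * Rabs y ^ j)).
Proof.
  intros Hc HM HN Hx Hy. pose proof (Rabs_pos x). pose proof (Rabs_pos y).
  assert (Inner : forall i, ex_series (fun j => Rabs (c i j) * Rabs x ^ i * Rabs y ^ j) /\
            0 <= Series (fun j => Rabs (c i j) * Rabs x ^ i * Rabs y ^ j) <= 2 * (C * (M * Rabs x) ^ i)).
  { intros i. apply (series_dominated_geom _ _ (N * Rabs y)); [split; nonneg|]. intros j.
    pose proof (pow_le _ i (Rabs_pos x)). pose proof (pow_le _ j (Rabs_pos y)).
    split; [nonneg|]. rewrite !Rpow_mult_distr.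
    replace (C * (M ^ i * Rabs x ^ i) * (N ^ j * Rabs y ^ j))
      with (C * M ^ i * N ^ j * (Rabs x ^ i * Rabs y ^ j)) by ring.
    rewrite Rmult_assoc. apply Rmult_le_compat_r; [nonneg | apply Hc]. }
  split; [intros i; apply Inner|].
  apply (series_dominated_geom _ (2 * C) (M * Rabs x)); [split; nonneg|].
  intros i. rewrite Rmult_assoc. apply Inner.
Qed.

Lemma xhat_analytic2 k A : 0 < k -> 0 < A -> analytic2_on (fun y z => 0 < y /\ 0 < z) (xhat k A).
Proof.
  intros Hk HA p q [Hp Hq].
  destruct (xhat_local_expansion k A p q Hk HA Hp ltac:(lra))
    as [c [C [M [N [r [Hr [HM [HN [HrM [HrN [Hc Hexp]]]]]]]]]]].
  exists c, (Rmin r q). split; [apply Rmin_glb_lt; lra|].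
  intros u v Hu Hv. pose proof (Rmin_l r q). pose proof (Rmin_r r q).
  destruct (lt_radius_bounds r M (u - p) ltac:(lra) HrM ltac:(lra)) as [_ Hu2].
  destruct (lt_radius_bounds r N (v - q) ltac:(lra) HrN ltac:(lra)) as [_ Hv2].
  destruct (double_series_geom c C M N (u - p) (v - q) Hc ltac:(lra) ltac:(lra) Hu2 Hv2) as [D1 D2].
  split; [exact D1 | split; [exact D2|]].
  assert (Hrow : forall i, Rabs (PSeries (c i) (v - q)) <= (2 * C) * M ^ i).
  { intros i. replace (2 * C * M ^ i) with (2 * (C * M ^ i)) by ring.
    apply (PSeries_geom_bound (c i) _ N); [intros j; apply Hc | lra | exact Hv2]. }
  destruct (PSeries_geom_bound _ _ M (u - p) Hrow ltac:(lra) Hu2) as [Hex _].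
  replace (xhat k A u v) with (PSeries (fun i => PSeries (c i) (v - q)) (u - p)).
  - eapply is_series_ext; [|apply Series_correct, ex_series_Rabs, Hex].
    intros i. unfold PSeries. rewrite <- Series_scal_r. apply Series_ext. intros j. ring.
  - pose proof (proj1 (Rabs_lt_between' _ _ _) Hv). rewrite Hexp by lra. f_equal; ring.
Qed.

Lemma xhat_analytic_z0 k A : 0 < k -> 0 < A -> analytic_on (fun y => 0 < y) (fun y => xhat k A y 0).
Proof.
  intros Hk HA p Hp.
  destruct (xhat_local_expansion k A p 0 Hk HA Hp (Rle_refl 0))
    as [c [C [M [N [r [Hr [HM [HN [HrM [HrN [Hc Hexp]]]]]]]]]]].
  exists (fun i => c i 0%nat), r. split; [exact Hr|]. intros u Hu. apply is_pseries_R.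
  destruct (lt_radius_bounds r M (u - p) HM HrM Hu) as [_ Hu2].
  destruct (PSeries_geom_bound (fun i => c i 0%nat) C M (u - p)) as [Hex _]; [|lra | exact Hu2|].
  { intros i. specialize (Hc i 0%nat). rewrite pow_O, Rmult_1_r in Hc. exact Hc. }
  replace (xhat k A u 0) with (PSeries (fun i => c i 0%nat) (u - p)); [apply Series_correct, ex_series_Rabs, Hex|].
  rewrite <- (PSeries_ext (fun i => PSeries (c i) 0)) by (intros; apply PSeries_0).
  rewrite Hexp by (rewrite ?Rabs_R0; lra). f_equal; ring.
Qed.

(** * The free boundary problem *)

Lemma filterlim_Rmult {T : Type} {F : (T -> Prop) -> Prop} {FF : Filter F} (f g : T -> R) a b :
  filterlim f F (locally a) -> filterlim g F (locally b) -> filterlim (fun x => f x * g x) F (locally (a * b)).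
Proof. intros Hf Hg. exact (filterlim_comp_2 f g Rmult Hf Hg (@filterlim_mult R_AbsRing a b)). Qed.

Lemma filterlim_Rplus {T : Type} {F : (T -> Prop) -> Prop} {FF : Filter F} (f g : T -> R) a b :
  filterlim f F (locally a) -> filterlim g F (locally b) -> filterlim (fun x => f x + g x) F (locally (a + b)).
Proof. intros Hf Hg. exact (filterlim_comp_2 f g Rplus Hf Hg (@filterlim_plus R_AbsRing R_NormedModule a b)). Qed.

Lemma is_derive_left_quotient (f : R -> R) x l : is_derive f x l ->
  filterlim (fun h => (f (x + h) - f x) / h) (at_left 0) (locally l).
Proof.
  intros H. apply is_derive_Reals in H. apply filterlim_locally. intros eps.
  destruct (H eps (cond_pos eps)) as [del Hd]. exists del. intros h Hh Hneg.
  apply Hd; [lra|]. change (Rabs (h - 0) < del) in Hh. rewrite Rminus_0_r in Hh. exact Hh.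
Qed.

Lemma at_left_between x1 : 0 < x1 -> at_left 0 (fun h => - x1 < h < 0).
Proof.
  intros Hx1. exists (mkposreal x1 Hx1). intros h Hh Hneg.
  change (Rabs (h - 0) < x1) in Hh. apply Rabs_lt_between' in Hh. lra.
Qed.

Lemma at_right_between x1 : 0 < x1 -> at_right 0 (fun h => 0 < h < x1).
Proof.
  intros Hx1. exists (mkposreal x1 Hx1). intros h Hh Hpos.
  change (Rabs (h - 0) < x1) in Hh. apply Rabs_lt_between' in Hh. lra.
Qed.

(* [f (x + h) = f x + h q(h)] with [q] the difference quotient. *)
Lemma left_quotient_continuous (f : R -> R) x l :
  filterlim (fun h => (f (x + h) - f x) / h) (at_left 0) (locally l) ->
  filterlim (fun h => f (x + h)) (at_left 0) (locally (f x)).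
Proof.
  intros Hq.
  assert (Hid : filterlim (fun h : R => h) (at_left 0) (locally 0))
    by (apply (filterlim_filter_le_1 (F := locally 0)); [apply filter_le_within | apply filterlim_id]).
  pose proof (filterlim_Rplus _ _ (f x) (0 * l) (filterlim_const (f x)) (filterlim_Rmult _ _ _ _ Hid Hq)) as H.
  rewrite Rmult_0_l, Rplus_0_r in H. revert H. apply filterlim_ext_loc.
  exists (mkposreal 1 Rlt_0_1). intros h _ Hneg. field. lra.
Qed.

Lemma left_quotient_agree (y Y : R -> R) x1 z0 l : 0 < x1 -> (forall t, 0 < t < x1 -> y t = Y t) ->
  filterlim (fun h => (y (x1 + h) - y x1) / h) (at_left 0) (locally z0) -> is_derive Y x1 l ->
  y x1 = Y x1 /\ z0 = l.
Proof.
  intros Hx1 Heq Hq HY. pose proof (is_derive_left_quotient Y x1 l HY) as HqY.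
  assert (Hev : at_left 0 (fun h => y (x1 + h) = Y (x1 + h)))
    by (eapply filter_imp; [|apply (at_left_between x1 Hx1)]; intros h Hh; apply Heq; lra).
  assert (Hproper := Proper_StrongProper _ (at_left_proper_filter 0)).
  assert (E : y x1 = Y x1).
  { apply (filterlim_locally_unique (fun h => y (x1 + h)) _ _ (left_quotient_continuous y x1 z0 Hq)).
    eapply filterlim_ext_loc; [|apply (left_quotient_continuous Y x1 l HqY)].
    eapply filter_imp; [|exact Hev]. intros h Hh. symmetry. exact Hh. }
  split; [exact E|].
  apply (filterlim_locally_unique _ _ _ Hq). eapply filterlim_ext_loc; [|exact HqY].
  eapply filter_imp; [|exact Hev]. intros h Hh. rewrite E, Hh. reflexivity.
Qed.

Lemma right_limit_agree (y Y : R -> R) x1 l : 0 < x1 -> (forall t, 0 < t < x1 -> y t = Y t) ->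
  filterlim y (at_right 0) (locally (y 0)) -> is_derive Y 0 l -> y 0 = Y 0.
Proof.
  intros Hx1 Heq Hc HY. assert (Hproper := Proper_StrongProper _ (at_right_proper_filter 0)).
  apply (filterlim_locally_unique y _ _ Hc).
  eapply filterlim_ext_loc; [|apply (filterlim_filter_le_1 (F := locally 0)); [apply filter_le_within|]].
  - eapply filter_imp; [|apply (at_right_between x1 Hx1)]. intros h Hh. symmetry. apply Heq, Hh.
  - apply (@ex_derive_continuous R_AbsRing R_NormedModule). exists l. exact HY.
Qed.

Lemma ode_general_solution (a b c lo hi : R) (y : R -> R) : 0 < a -> 0 < b ->
  (exists dy ddy : R -> R, forall x, lo < x < hi ->
     is_derive y x (dy x) /\ is_derive dy x (ddy x) /\ b * dy x - a * ddy x - c = 0) ->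
  exists K L, forall t, lo < t < hi -> y t = c / b * t + K * exp (b / a * t) + L.
Proof.
  intros Ha Hb [dy [ddy HD]].
  destruct (Rlt_le_dec lo hi) as [Hlh|]; [|exists 0, 0; intros t Ht; lra].
  set (m := (lo + hi) / 2). assert (Hm : lo < m < hi) by (unfold m; lra).
  set (g := fun x => (dy x - c / b) * exp (- (b / a * x))).
  assert (Hg : forall x, lo < x < hi -> g x = g m).
  { intros x Hx. apply (is_derive_0_const g lo hi); [|exact Hx | exact Hm].
    intros u Hu. destruct (HD u Hu) as [_ [H2 H3]]. unfold g.
    auto_derive; [repeat split; eexists; eassumption|]. rewrite (Derive_eta _ _ _ H2).
    replace (ddy u) with ((b * dy u - c) / a) by (field_simplify_eq; lra). field. lra. }
  set (h := fun x => y x - c / b * x - g m / (b / a) * exp (b / a * x)).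
  assert (Hh : forall x, lo < x < hi -> h x = h m).
  { intros x Hx. apply (is_derive_0_const h lo hi); [|exact Hx | exact Hm].
    intros u Hu. destruct (HD u Hu) as [H1 _]. unfold h.
    auto_derive; [repeat split; eexists; eassumption|]. rewrite (Derive_eta _ _ _ H1).
    rewrite <- (Hg u Hu). unfold g.
    replace (exp (- (b / a * u))) with (/ exp (b / a * u)) by (rewrite exp_Ropp; reflexivity).
    pose proof (exp_pos (b / a * u)). field. repeat split; lra. }
  exists (g m / (b / a)), (h m). intros t Ht. rewrite <- (Hh t Ht). unfold h. ring.
Qed.

Definition profile (k A y0 z0 xh t : R) : R :=
  - y0 + A * t + (z0 - A) * (exp (k * (t - xh)) - exp (- (k * xh))) / k.

Lemma is_derive_profile k A y0 z0 xh t : 0 < k ->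
  is_derive (profile k A y0 z0 xh) t (A + (z0 - A) * exp (k * (t - xh))).
Proof. intros Hk. unfold profile. auto_derive; [exact I|]. unfold Rminus. field. lra. Qed.

Lemma profile_0 k A y0 z0 xh : profile k A y0 z0 xh 0 = - y0.
Proof. unfold profile. replace (k * (0 - xh)) with (- (k * xh)) by ring. unfold Rdiv. ring. Qed.

Lemma profile_xh k A y0 z0 xh : 0 < k -> profile k A y0 z0 xh xh = rise k A xh z0 - y0.
Proof.
  intros Hk. unfold profile, rise, phi. rewrite Rminus_diag, Rmult_0_r, exp_0. field. lra.
Qed.

Lemma fbp_sol_profile a b c y0 z0 y xh : 0 < a -> 0 < b -> 0 < xh -> fbp_sol a b c y0 z0 y xh ->
  rise (b / a) (c / b) xh z0 = y0 /\
  forall t, 0 <= t <= xh -> y t = profile (b / a) (c / b) y0 z0 xh t.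
Proof.
  intros Ha Hb Hxh [Hode [Hc0 [Hyxh [Hy0 Hq]]]].
  destruct (ode_general_solution a b c 0 xh y Ha Hb Hode) as [K [L HyY]].
  set (k := b / a) in *. set (A := c / b) in *. assert (Hk : 0 < k) by (apply Rdiv_lt_0_compat; lra).
  set (Y := fun t => A * t + K * exp (k * t) + L).
  assert (HYd : forall t, is_derive Y t (A + K * k * exp (k * t)))
    by (intros t; unfold Y; auto_derive; [exact I | ring]).
  pose proof (right_limit_agree y Y xh _ Hxh HyY Hc0 (HYd 0)) as E0.
  destruct (left_quotient_agree y Y xh z0 _ Hxh HyY Hq (HYd xh)) as [E1 E2].
  assert (Hee : exp (k * xh) * exp (- (k * xh)) = 1) by (rewrite <- exp_plus, Rplus_opp_r; apply exp_0).
  assert (HK : K = (z0 - A) * exp (- (k * xh)) / k).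
  { rewrite E2. replace ((A + K * k * exp (k * xh) - A) * exp (- (k * xh)) / k)
      with (K * (exp (k * xh) * exp (- (k * xh)))) by (field; lra). rewrite Hee. ring. }
  assert (HL : L = - y0 - K) by (unfold Y in E0; rewrite Hy0, Rmult_0_r, Rmult_0_r, exp_0 in E0; lra).
  assert (HYp : forall t, Y t = profile k A y0 z0 xh t).
  { intros t. unfold Y, profile. rewrite HL, HK.
    replace (k * (t - xh)) with (k * t + - (k * xh)) by ring. rewrite exp_plus. field. lra. }
  split.
  - rewrite Hyxh, HYp, profile_xh in E1 by exact Hk. lra.
  - intros t Ht. rewrite <- HYp.
    destruct (Req_dec t 0) as [->|]; [exact E0|].
    destruct (Req_dec t xh) as [->|]; [exact E1|]. apply HyY. lra.
Qed.

Lemma profile_fbp_sol a b c y0 z0 xh : 0 < a -> 0 < b -> rise (b / a) (c / b) xh z0 = y0 ->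
  fbp_sol a b c y0 z0 (profile (b / a) (c / b) y0 z0 xh) xh.
Proof.
  intros Ha Hb Hrise. assert (Hk : 0 < b / a) by (apply Rdiv_lt_0_compat; lra).
  split; [|split; [|split; [|split]]].
  - exists (fun t => c / b + (z0 - c / b) * exp (b / a * (t - xh))),
      (fun t => b / a * (z0 - c / b) * exp (b / a * (t - xh))).
    intros x _. split; [apply is_derive_profile, Hk|]. split.
    + auto_derive; [exact I | unfold Rminus; ring].
    + field. lra.
  - apply (filterlim_filter_le_1 (F := locally 0)); [apply filter_le_within|].
    apply (@ex_derive_continuous R_AbsRing R_NormedModule). eexists. apply is_derive_profile, Hk.
  - rewrite profile_xh by exact Hk. lra.
  - apply profile_0.
  - pose proof (is_derive_profile (b / a) (c / b) y0 z0 xh xh Hk) as Hd.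
    rewrite Rminus_diag, Rmult_0_r, exp_0, Rmult_1_r in Hd.
    replace (c / b + (z0 - c / b)) with z0 in Hd by ring.
    exact (is_derive_left_quotient _ _ _ Hd).
Qed.

Theorem lemma4p2 (a b c : R) (ha : 0 < a) (hb : 0 < b) (hc : 0 < c) :
  exists xh : R -> R -> R,
    (* existence and uniqueness of (y, xh) for every y0, z0 > 0 *)
    (forall y0 z0, 0 < y0 -> 0 < z0 ->
       0 < xh y0 z0 /\
       (exists y, fbp_sol a b c y0 z0 y (xh y0 z0)) /\
       (forall y1 x1 y2 x2, 0 < x1 -> 0 < x2 ->
          fbp_sol a b c y0 z0 y1 x1 -> fbp_sol a b c y0 z0 y2 x2 ->
          x1 = x2 /\ (forall t, 0 <= t <= x1 -> y1 t = y2 t))) /\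
    (* monotonicity *)
    (forall z0 y1 y2, 0 < z0 -> 0 < y1 -> y1 < y2 -> xh y1 z0 < xh y2 z0) /\
    (forall y0 z1 z2, 0 < y0 -> 0 < z1 -> z1 < z2 -> xh y0 z2 < xh y0 z1) /\
    (* limits in y0 *)
    (forall z0, 0 < z0 ->
       filterlim (fun y0 => xh y0 z0) (Rbar_locally p_infty) (Rbar_locally p_infty) /\
       filterlim (fun y0 => xh y0 z0) (at_right 0) (locally 0)) /\
    (* limit z0 -> oo *)
    (forall y0, 0 < y0 ->
       filterlim (fun z0 => xh y0 z0) (Rbar_locally p_infty) (locally 0)) /\
    (* the critical value xh_c *)
    (exists xc : R -> R,
       (forall y0, 0 < y0 -> 0 < xc y0) /\
       (forall y0, 0 < y0 ->
          filterlim (fun z0 => xh y0 z0) (at_right 0) (locally (xc y0))) /\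
       (forall y1 y2, 0 < y1 -> y1 < y2 -> xc y1 < xc y2) /\
       filterlim xc (at_right 0) (locally 0) /\
       filterlim xc (Rbar_locally p_infty) (Rbar_locally p_infty) /\
       analytic_on (fun y0 => 0 < y0) xc) /\
    (* analytic dependence of xh on (y0, z0) *)
    analytic2_on (fun y0 z0 => 0 < y0 /\ 0 < z0) xh.
Proof.
  assert (Hk : 0 < b / a) by (apply Rdiv_lt_0_compat; lra).
  assert (HA : 0 < c / b) by (apply Rdiv_lt_0_compat; lra).
  exists (xhat (b / a) (c / b)). split; [|split; [|split; [|split; [|split; [|split]]]]].
  - intros y0 z0 Hy Hz. destruct (xhat_spec _ _ Hk HA y0 z0 Hy ltac:(lra)) as [P E].
    split; [exact P | split; [eexists; apply profile_fbp_sol; assumption|]].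
    intros y1 x1 y2 x2 H1 H2 S1 S2.
    destruct (fbp_sol_profile a b c y0 z0 y1 x1 ha hb H1 S1) as [F1 P1].
    destruct (fbp_sol_profile a b c y0 z0 y2 x2 ha hb H2 S2) as [F2 P2].
    assert (E12 : x1 = x2) by (rewrite <- (xhat_unique _ _ Hk HA y0 z0 x1), <- (xhat_unique _ _ Hk HA y0 z0 x2);
                               auto; lra).
    subst x2. split; [reflexivity|]. intros t Ht. rewrite P1, P2 by exact Ht. reflexivity.
  - intros z0 y1 y2 Hz. apply xhat_lt_y; lra.
  - intros y0 z1 z2 Hy Hz. apply xhat_lt_z; lra.
  - intros z0 Hz. split; [apply xhat_lim_y_pinfty | apply xhat_lim_y_0]; lra.
  - intros y0 Hy. apply xhat_lim_z_pinfty; lra.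
  - exists (fun y0 => xhat (b / a) (c / b) y0 0). repeat split.
    + intros y0 Hy. apply (xhat_spec _ _ Hk HA y0 0 Hy (Rle_refl 0)).
    + intros y0 Hy. apply xhat_lim_z_0; lra.
    + intros y1 y2 H1 H12. apply xhat_lt_y; lra.
    + apply xhat_lim_y_0; lra.
    + apply xhat_lim_y_pinfty; lra.
    + apply xhat_analytic_z0; assumption.
  - apply xhat_analytic2; assumption.
Qed.
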